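(* Let $\lambda\in\mathbb{R}$ and let $f(\zeta,u)$ be a complex function on a connected open set $U\subset\mathbb{C}_\zeta\times\mathbb{R}_u$, jointly smooth and holomorphic in $\zeta$, with $f_{,\zeta\zeta}\neq0$ and $f_{,\zeta\zeta\zeta}\neq0$ on $U$. Put $\phi=(\ln f_{,\zeta\zeta})_{,\zeta}$ and $\psi=(\ln f_{,\zeta\zeta})_{,u}$. Then $$\left(\frac{\psi}{\phi}\right)_{,\zeta}=i\lambda\left[\left(\frac{2}{\phi}\right)_{,\zeta}+1\right]\quad\text{on }U$$ if and only if, near every point of $U$, $$f(\zeta,u)=\mathrm{f}\big(\zeta e^{i\lambda u}-h(u)\big)+A_1(u)\zeta+A_0(u)$$ for some holomorphic function $\mathrm{f}$ of one complex variable with $\mathrm{f}'''\neq0$ and smooth complex functions $h,A_1,A_0$ of $u$.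
   Context: Subscripts after a comma denote partial derivatives; $\zeta$ is a complex variable and $u$ a real variable; primes denote derivatives of $\mathrm{f}$ with respect to its argument. *)

From Stdlib Require Import Reals List.
From Coquelicot Require Import Coquelicot.
Open Scope R_scope.

Definition pt : Type := (C * R)%type.

Definition open_pt (U : pt -> Prop) : Prop :=
  forall p, U p -> exists e : posreal, forall (z : C) (u : R),
    Cmod (z - fst p)%C < e -> Rabs (u - snd p) < e -> U (z, u).

Definition connected_pt (U : pt -> Prop) : Prop :=
  forall V W : pt -> Prop, open_pt V -> open_pt W ->
    (forall p, U p -> V p \/ W p) ->
    (forall p, U p -> V p -> W p -> False) ->
    (exists p, U p /\ V p) -> (exists p, U p /\ W p) -> False.

Definition open_C (D : C -> Prop) : Prop :=
  forall z, D z -> exists e : posreal, forall w, Cmod (w - z)%C < e -> D w.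

Definition open_R (I : R -> Prop) : Prop :=
  forall t, I t -> exists e : posreal, forall s, Rabs (s - t) < e -> I s.

Definition continuous_pt (g : pt -> C) (p : pt) : Prop :=
  forall e : posreal, exists d : posreal, forall q : pt,
    Cmod (fst q - fst p)%C < d -> Rabs (snd q - snd p) < d ->
    Cmod (g q - g p)%C < e.

Definition dshift (p v : pt) (t : R) : pt :=
  ((fst p + RtoC t * fst v)%C, snd p + t * snd v).

Definition dirD (v : pt) (g : pt -> C) (p : pt) : C :=
  (Derive (fun t => Re (g (dshift p v t))) 0,
   Derive (fun t => Im (g (dshift p v t))) 0).

Definition dirD_ex (v : pt) (g : pt -> C) (p : pt) : Prop :=
  ex_derive (fun t => Re (g (dshift p v t))) 0 /\
  ex_derive (fun t => Im (g (dshift p v t))) 0.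

Fixpoint iterD (vs : list pt) (g : pt -> C) : pt -> C :=
  match vs with
  | nil => g
  | v :: vs' => dirD v (iterD vs' g)
  end.

(* Joint smoothness (C^infinity in the three real variables Re z, Im z, u)
   on U: all iterated directional derivatives exist and are continuous. *)
Definition smooth_on (U : pt -> Prop) (g : pt -> C) : Prop :=
  forall vs : list pt,
    (forall p, U p -> continuous_pt (iterD vs g) p) /\
    (forall v p, U p -> dirD_ex v (iterD vs g) p).

Definition C_diff (F : C -> C) (z : C) : Prop :=
  @ex_derive C_AbsRing C_NormedModule F z.

Definition holo_in_zeta_on (U : pt -> Prop) (g : pt -> C) : Prop :=
  forall p, U p -> C_diff (fun w => g (w, snd p)) (fst p).

Definition Dz (g : pt -> C) (p : pt) : C := C_derive (fun w => g (w, snd p)) (fst p).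
Definition Du (g : pt -> C) (p : pt) : C := dirD (RtoC 0, 1) g p.

(* phi = (ln f_{,zz})_{,z} = f_{,zzz} / f_{,zz},  psi = (ln f_{,zz})_{,u} = f_{,zzu} / f_{,zz} *)
Definition phi_of (f : pt -> C) (p : pt) : C := (Dz (Dz (Dz f)) p / Dz (Dz f) p)%C.
Definition psi_of (f : pt -> C) (p : pt) : C := (Du (Dz (Dz f)) p / Dz (Dz f) p)%C.

Definition derC (a : R -> C) (t : R) : C :=
  (Derive (fun s => Re (a s)) t, Derive (fun s => Im (a s)) t).

Definition smooth_R_on (I : R -> Prop) (a : R -> C) : Prop :=
  forall (n : nat) (t : R), I t ->
    ex_derive (fun s => Re (Nat.iter n derC a s)) t /\
    ex_derive (fun s => Im (Nat.iter n derC a s)) t.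

Definition cexpi (x : R) : C := (cos x, sin x).

(* Put kappa = (f_zzu - 2 i lambda f_zz) / f_zzz - i lambda zeta.  A direct computation gives
   kappa_zeta = (psi/phi)_zeta - i lambda ((2/phi)_zeta + 1), so the equation says exactly that
   kappa = c(u) is independent of zeta, i.e. f_zz solves the transport equation
     f_zzu = 2 i lambda f_zz + (c(u) + i lambda zeta) f_zzz.
   With h' = - c e^{i lambda u}, the quantity e^{-2 i lambda u} f_zz is constant along the
   characteristics zeta e^{i lambda u} - h(u) = const, so f_zz = e^{2 i lambda u} F''(zeta e^{i lambda u} - h(u))
   where F is read off on the slice u = u0; integrating twice in zeta gives the representation.
   Conversely, for f of that form kappa = - h'(u) e^{-i lambda u} does not depend on zeta. *)

From Stdlib Require Import Reals Lra Lia List.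
From Coquelicot Require Import Coquelicot.
Open Scope R_scope.

(** * Complex derivatives *)

Definition is_derive_C (G : C -> C) (z l : C) : Prop :=
  forall eps : posreal, exists d : posreal, forall k : C,
    Cmod k < d -> Cmod (G (z + k) - G z - l * k)%C <= eps * Cmod k.

(* Coquelicot has two non-convertible normed-module structures on [C];
   [C_derive] uses the first, the product rule the second. *)
Lemma is_derive_C_is_derive G z l :
  is_derive_C G z l -> @is_derive C_AbsRing C_NormedModule G z l.
Proof.
  intros H. split; [apply is_linear_scal_l|].
  intros x Hx. apply (@is_filter_lim_locally_unique C_AbsRing (AbsRing_NormedModule C_AbsRing)) in Hx.
  subst x. intros eps. destruct (H eps) as [d Hd]. exists d. intros y Hy.
  change (Cmod (G y - G z - (y - z) * l)%C <= eps * Cmod (y - z)%C).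
  replace y with (z + (y - z))%C at 1 by ring.
  replace ((y - z) * l)%C with (l * (y - z))%C by ring.
  apply Hd. exact Hy.
Qed.

Lemma is_derive_C_is_derive_abs G z l :
  is_derive_C G z l -> @is_derive C_AbsRing (AbsRing_NormedModule C_AbsRing) G z l.
Proof.
  intros H. split; [apply is_linear_scal_l|].
  intros x Hx. apply (@is_filter_lim_locally_unique C_AbsRing (AbsRing_NormedModule C_AbsRing)) in Hx.
  subst x. intros eps. destruct (H eps) as [d Hd]. exists d. intros y Hy.
  change (Cmod (G y - G z - (y - z) * l)%C <= eps * Cmod (y - z)%C).
  replace y with (z + (y - z))%C at 1 by ring.
  replace ((y - z) * l)%C with (l * (y - z))%C by ring.
  apply Hd. exact Hy.
Qed.

Lemma is_derive_is_derive_C G z l :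
  @is_derive C_AbsRing C_NormedModule G z l -> is_derive_C G z l.
Proof.
  intros [_ H] eps. specialize (H z (fun P HP => HP) eps). destruct H as [d Hd].
  exists d. intros k Hk.
  assert (Ek : (z + k - z)%C = k) by ring.
  assert (Hb : ball z d (z + k)%C) by (change (Cmod (z + k - z)%C < d); rewrite Ek; exact Hk).
  specialize (Hd (z + k)%C Hb).
  change (Cmod (G (z + k) - G z - (z + k - z) * l)%C <= eps * Cmod (z + k - z)%C) in Hd.
  rewrite Ek in Hd. replace (l * k)%C with (k * l)%C by ring. exact Hd.
Qed.

Lemma is_derive_abs_is_derive_C G z l :
  @is_derive C_AbsRing (AbsRing_NormedModule C_AbsRing) G z l -> is_derive_C G z l.
Proof.
  intros [_ H] eps. specialize (H z (fun P HP => HP) eps). destruct H as [d Hd].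
  exists d. intros k Hk.
  assert (Ek : (z + k - z)%C = k) by ring.
  assert (Hb : ball z d (z + k)%C) by (change (Cmod (z + k - z)%C < d); rewrite Ek; exact Hk).
  specialize (Hd (z + k)%C Hb).
  change (Cmod (G (z + k) - G z - (z + k - z) * l)%C <= eps * Cmod (z + k - z)%C) in Hd.
  rewrite Ek in Hd. replace (l * k)%C with (k * l)%C by ring. exact Hd.
Qed.

Lemma is_derive_C_of_C_diff F z : C_diff F z -> is_derive_C F z (C_derive F z).
Proof. intros H. apply is_derive_is_derive_C, C_derive_correct; auto. Qed.

Lemma C_derive_of_is_derive_C F z l : is_derive_C F z l -> C_derive F z = l.
Proof. intros H. apply is_C_derive_unique, is_derive_C_is_derive, H. Qed.

Lemma C_diff_of_is_derive_C F z l : is_derive_C F z l -> C_diff F z.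
Proof. intros H. exists l. apply is_derive_C_is_derive, H. Qed.

Lemma is_derive_C_plus F G z a b :
  is_derive_C F z a -> is_derive_C G z b -> is_derive_C (fun w => F w + G w)%C z (a + b)%C.
Proof.
  intros H1 H2. apply is_derive_is_derive_C.
  apply (@is_derive_plus C_AbsRing C_NormedModule); apply is_derive_C_is_derive; auto.
Qed.

Lemma is_derive_C_opp F z a : is_derive_C F z a -> is_derive_C (fun w => - F w)%C z (- a)%C.
Proof.
  intros H. apply is_derive_is_derive_C.
  apply (@is_derive_opp C_AbsRing C_NormedModule), is_derive_C_is_derive, H.
Qed.

Lemma is_derive_C_minus F G z a b :
  is_derive_C F z a -> is_derive_C G z b -> is_derive_C (fun w => F w - G w)%C z (a - b)%C.
Proof. intros. apply is_derive_C_plus, is_derive_C_opp; auto. Qed.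

Lemma is_derive_C_mult F G z a b : is_derive_C F z a -> is_derive_C G z b ->
  is_derive_C (fun w => F w * G w)%C z (a * G z + F z * b)%C.
Proof.
  intros H1 H2. apply is_derive_abs_is_derive_C.
  apply (@is_derive_mult C_AbsRing); try apply is_derive_C_is_derive_abs; auto.
  exact Cmult_comm.
Qed.

Lemma is_derive_C_const c z : is_derive_C (fun _ => c) z (RtoC 0).
Proof.
  intros eps. exists (mkposreal 1 Rlt_0_1). intros k _.
  replace (c - c - RtoC 0 * k)%C with (RtoC 0) by ring. rewrite Cmod_0.
  apply Rmult_le_pos; [apply Rlt_le, cond_pos | apply Cmod_ge_0].
Qed.

Lemma is_derive_C_mult_r a z : is_derive_C (fun w => w * a)%C z a.
Proof.
  intros eps. exists (mkposreal 1 Rlt_0_1). intros k _.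
  replace ((z + k) * a - z * a - a * k)%C with (RtoC 0) by ring. rewrite Cmod_0.
  apply Rmult_le_pos; [apply Rlt_le, cond_pos | apply Cmod_ge_0].
Qed.

Lemma is_derive_C_id z : is_derive_C (fun w => w) z (RtoC 1).
Proof.
  intros eps. exists (mkposreal 1 Rlt_0_1). intros k _.
  replace (z + k - z - RtoC 1 * k)%C with (RtoC 0) by ring. rewrite Cmod_0.
  apply Rmult_le_pos; [apply Rlt_le, cond_pos | apply Cmod_ge_0].
Qed.

Lemma is_derive_C_comp F G z a b :
  is_derive_C G z b -> is_derive_C F (G z) a -> is_derive_C (fun w => F (G w)) z (a * b)%C.
Proof.
  intros H1 H2. apply is_derive_is_derive_C.
  replace (a * b)%C with (b * a)%C by ring.
  apply (@is_derive_comp C_AbsRing C_NormedModule);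
    [apply is_derive_C_is_derive | apply is_derive_C_is_derive_abs]; auto.
Qed.

Lemma is_derive_C_scal c F z a : is_derive_C F z a -> is_derive_C (fun w => c * F w)%C z (c * a)%C.
Proof.
  intros H. replace (c * a)%C with (0 * F z + c * a)%C by ring.
  apply is_derive_C_mult; auto. apply is_derive_C_const.
Qed.

Lemma is_derive_C_ext_loc F G z a :
  (exists r : posreal, forall w, Cmod (w - z)%C < r -> F w = G w) ->
  is_derive_C F z a -> is_derive_C G z a.
Proof.
  intros [r Hr] H eps. destruct (H eps) as [d Hd].
  exists (mkposreal _ (Rmin_pos _ _ (cond_pos d) (cond_pos r))). simpl. intros k Hk.
  rewrite <- !Hr.
  - apply Hd. eapply Rlt_le_trans; [apply Hk | apply Rmin_l].
  - replace (z - z)%C with (RtoC 0) by ring. rewrite Cmod_0. apply cond_pos.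
  - replace (z + k - z)%C with k by ring. eapply Rlt_le_trans; [apply Hk | apply Rmin_r].
Qed.

Lemma Cmod_triangle_rev (a b : C) : Cmod a - Cmod b <= Cmod (a + b)%C.
Proof.
  pose proof (Cmod_triangle (a + b)%C (- b)%C) as H. rewrite Cmod_opp in H.
  replace (a + b + - b)%C with a in H by ring. lra.
Qed.

Lemma is_derive_C_inv z : z <> RtoC 0 -> is_derive_C (fun w => / w)%C z (- / (z * z))%C.
Proof.
  intros Hz eps.
  pose proof (proj1 (Cmod_gt_0 z) Hz) as Hm.
  assert (P : 0 < Rmin (Cmod z / 2) (eps * Cmod z ^ 3 / 2)).
  { apply Rmin_pos; [lra|]. pose proof (cond_pos eps).
    apply Rdiv_lt_0_compat; [apply Rmult_lt_0_compat; auto; apply pow_lt; auto | lra]. }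
  exists (mkposreal _ P). simpl. intros k Hk.
  assert (Hk1 : Cmod k < Cmod z / 2) by (eapply Rlt_le_trans; [apply Hk|apply Rmin_l]).
  assert (Hk2 : Cmod k < eps * Cmod z ^ 3 / 2) by (eapply Rlt_le_trans; [apply Hk|apply Rmin_r]).
  assert (Hzk : Cmod z / 2 <= Cmod (z + k)%C) by (pose proof (Cmod_triangle_rev z k); lra).
  assert (Hzk0 : (z + k)%C <> RtoC 0) by (intros E; rewrite E, Cmod_0 in Hzk; lra).
  replace (/ (z + k) - / z - - / (z * z) * k)%C with (k * k / (z * z * (z + k)))%C by (field; auto).
  unfold Cdiv. rewrite !Cmod_mult, Cmod_inv, !Cmod_mult by (repeat apply Cmult_neq_0; auto).
  pose proof (Cmod_ge_0 k).
  apply Rle_trans with (Cmod k * Cmod k * / (Cmod z * Cmod z * (Cmod z / 2))).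
  { apply Rmult_le_compat_l; [nra|]. apply Rinv_le_contravar.
    - repeat apply Rmult_lt_0_compat; lra.
    - apply Rmult_le_compat_l; nra. }
  replace (Cmod k * Cmod k * / (Cmod z * Cmod z * (Cmod z / 2))) with
    (Cmod k * (2 * Cmod k / Cmod z ^ 3)) by (field; lra).
  rewrite (Rmult_comm eps). apply Rmult_le_compat_l; auto.
  apply Rmult_le_reg_r with (Cmod z ^ 3); [apply pow_lt; auto|].
  unfold Rdiv. rewrite Rmult_assoc, Rinv_l by (apply pow_nonzero; lra). lra.
Qed.

Lemma is_derive_C_div F G z a b : is_derive_C F z a -> is_derive_C G z b -> G z <> RtoC 0 ->
  is_derive_C (fun w => F w / G w)%C z ((a * G z - F z * b) / (G z * G z))%C.
Proof.
  intros H1 H2 Hn.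
  replace ((a * G z - F z * b) / (G z * G z))%C
    with (a * / G z + F z * (- / (G z * G z) * b))%C by (field; auto).
  apply (is_derive_C_mult F (fun w => / G w)%C); auto.
  apply (is_derive_C_comp (fun w => / w)%C G); auto. apply is_derive_C_inv; auto.
Qed.

(** * Derivatives of complex-valued functions of a real variable *)

Definition is_derive_RC (a : R -> C) (t : R) (l : C) : Prop :=
  is_derive (fun s => Re (a s)) t (Re l) /\ is_derive (fun s => Im (a s)) t (Im l).

Lemma Cmod_le_Rabs_Re_Im (z : C) : Cmod z <= Rabs (Re z) + Rabs (Im z).
Proof.
  destruct z as [a b]. unfold Cmod; simpl.
  pose proof (Rabs_pos a); pose proof (Rabs_pos b).
  rewrite <- (sqrt_Rsqr (Rabs a + Rabs b)) by lra.
  apply sqrt_le_1_alt. unfold Rsqr.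
  assert (a ^ 2 = Rabs a * Rabs a) by (rewrite <- Rabs_mult, Rabs_right; nra).
  assert (b ^ 2 = Rabs b * Rabs b) by (rewrite <- Rabs_mult, Rabs_right; nra).
  nra.
Qed.

Lemma im_le_Cmod (z : C) : Rabs (Im z) <= Cmod z.
Proof.
  destruct z as [a b]. unfold Cmod; simpl.
  rewrite <- sqrt_Rsqr_abs. apply sqrt_le_1_alt. unfold Rsqr. nra.
Qed.

Lemma is_derive_eps (f : R -> R) t l : is_derive f t l <->
  (forall eps : posreal, exists d : posreal, forall s : R,
    Rabs s < d -> Rabs (f (t + s) - f t - s * l) <= eps * Rabs s).
Proof.
  rewrite is_derive_Reals. split.
  - intros H eps. destruct (H eps (cond_pos eps)) as [d Hd]. exists d. intros s Hs.
    destruct (Req_dec s 0) as [->|Hs0].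
    { rewrite Rplus_0_r. replace (f t - f t - 0 * l) with 0 by ring. rewrite Rabs_R0. lra. }
    specialize (Hd s Hs0 Hs).
    replace (f (t + s) - f t - s * l) with (s * ((f (t + s) - f t) / s - l)) by (field; auto).
    rewrite Rabs_mult, Rmult_comm. apply Rmult_le_compat_r; [apply Rabs_pos | lra].
  - intros H eps Heps. destruct (H (mkposreal (eps / 2) ltac:(lra))) as [d Hd]. exists d.
    intros s Hs0 Hs. specialize (Hd s Hs). simpl in Hd.
    replace ((f (t + s) - f t) / s - l) with ((f (t + s) - f t - s * l) / s) by (field; auto).
    unfold Rdiv. rewrite Rabs_mult, Rabs_inv.
    apply Rle_lt_trans with (eps / 2 * Rabs s * / Rabs s).
    + apply Rmult_le_compat_r; auto. left. apply Rinv_0_lt_compat, Rabs_pos_lt; auto.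
    + field_simplify; [lra | apply Rabs_no_R0; auto].
Qed.

Lemma is_derive_RC_eps a t l : is_derive_RC a t l <->
  (forall eps : posreal, exists d : posreal, forall s : R,
    Rabs s < d -> Cmod (a (t + s)%R - a t - RtoC s * l)%C <= eps * Rabs s).
Proof.
  unfold is_derive_RC. rewrite !is_derive_eps. split.
  - intros [H1 H2] eps.
    assert (Pe : 0 < eps / 2) by (pose proof (cond_pos eps); lra).
    destruct (H1 (mkposreal _ Pe)) as [d1 Hd1]. destruct (H2 (mkposreal _ Pe)) as [d2 Hd2].
    exists (mkposreal _ (Rmin_pos _ _ (cond_pos d1) (cond_pos d2))). simpl. intros s Hs.
    assert (Hs1 : Rabs s < d1) by (eapply Rlt_le_trans; [apply Hs | apply Rmin_l]).
    assert (Hs2 : Rabs s < d2) by (eapply Rlt_le_trans; [apply Hs | apply Rmin_r]).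
    specialize (Hd1 s Hs1). specialize (Hd2 s Hs2).
    eapply Rle_trans; [apply Cmod_le_Rabs_Re_Im|].
    revert Hd1 Hd2. destruct (a (t + s)), (a t), l. simpl. intros Hd1 Hd2.
    replace (r + - r1 + - (s * r3 - 0 * r4)) with (r - r1 - s * r3) by ring.
    replace (r0 + - r2 + - (s * r4 + 0 * r3)) with (r0 - r2 - s * r4) by ring. lra.
  - intros H. split; intros eps; destruct (H eps) as [d Hd]; exists d; intros s Hs;
    specialize (Hd s Hs); eapply Rle_trans; try apply Hd;
    [eapply Rle_trans; [|apply re_le_Cmod] | eapply Rle_trans; [|apply im_le_Cmod]];
    destruct (a (t + s)), (a t), l; simpl; right; f_equal; ring.
Qed.

Lemma derC_of_is_derive_RC a t l : is_derive_RC a t l -> derC a t = l.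
Proof.
  intros [H1 H2]. unfold derC. destruct l. f_equal; apply is_derive_unique; auto.
Qed.

Lemma ex_derive_of_is_derive_RC a t l : is_derive_RC a t l ->
  ex_derive (fun s => Re (a s)) t /\ ex_derive (fun s => Im (a s)) t.
Proof. intros [H1 H2]. split; eexists; eauto. Qed.

Lemma is_derive_RC_derC a t : ex_derive (fun s => Re (a s)) t ->
  ex_derive (fun s => Im (a s)) t -> is_derive_RC a t (derC a t).
Proof. intros H1 H2. split; apply Derive_correct; auto. Qed.

Lemma is_derive_RC_ext_loc a b t l :
  locally t (fun s => a s = b s) -> is_derive_RC a t l -> is_derive_RC b t l.
Proof.
  intros He [H1 H2]. split; eapply is_derive_ext_loc; eauto;
    eapply filter_imp; try apply He; intros s Hs; simpl; rewrite Hs; auto.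
Qed.

Lemma is_derive_RC_const c t : is_derive_RC (fun _ => c) t (RtoC 0).
Proof. split; simpl; auto_derive; auto. Qed.

Lemma is_derive_RC_plus a b t la lb : is_derive_RC a t la -> is_derive_RC b t lb ->
  is_derive_RC (fun s => a s + b s)%C t (la + lb)%C.
Proof.
  intros [Ha1 Ha2] [Hb1 Hb2].
  split; [exact (is_derive_plus _ _ _ _ _ Ha1 Hb1) | exact (is_derive_plus _ _ _ _ _ Ha2 Hb2)].
Qed.

Lemma is_derive_RC_opp a t la : is_derive_RC a t la -> is_derive_RC (fun s => - a s)%C t (- la)%C.
Proof.
  intros [Ha1 Ha2]. split; [exact (is_derive_opp _ _ _ Ha1) | exact (is_derive_opp _ _ _ Ha2)].
Qed.

Lemma is_derive_RC_minus a b t la lb : is_derive_RC a t la -> is_derive_RC b t lb ->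
  is_derive_RC (fun s => a s - b s)%C t (la - lb)%C.
Proof. intros. apply is_derive_RC_plus, is_derive_RC_opp; auto. Qed.

Lemma is_derive_RC_mult a b t la lb : is_derive_RC a t la -> is_derive_RC b t lb ->
  is_derive_RC (fun s => a s * b s)%C t (la * b t + a t * lb)%C.
Proof.
  intros [Ha1 Ha2] [Hb1 Hb2].
  pose proof (fun f g df dg Hf Hg => is_derive_mult f g t df dg Hf Hg Rmult_comm) as Hmult.
  split.
  - apply is_derive_ext with (f := fun s => Re (a s) * Re (b s) - Im (a s) * Im (b s));
      [reflexivity|].
    replace (Re (la * b t + a t * lb)%C)
      with ((Re la * Re (b t) + Re (a t) * Re lb) - (Im la * Im (b t) + Im (a t) * Im lb))
      by (destruct la, lb, (a t), (b t); simpl; ring).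
    exact (is_derive_minus _ _ _ _ _ (Hmult _ _ _ _ Ha1 Hb1) (Hmult _ _ _ _ Ha2 Hb2)).
  - apply is_derive_ext with (f := fun s => Re (a s) * Im (b s) + Im (a s) * Re (b s));
      [reflexivity|].
    replace (Im (la * b t + a t * lb)%C)
      with ((Re la * Im (b t) + Re (a t) * Im lb) + (Im la * Re (b t) + Im (a t) * Re lb))
      by (destruct la, lb, (a t), (b t); simpl; ring).
    exact (is_derive_plus _ _ _ _ _ (Hmult _ _ _ _ Ha1 Hb2) (Hmult _ _ _ _ Ha2 Hb1)).
Qed.

Lemma is_derive_RC_scal c a t la : is_derive_RC a t la ->
  is_derive_RC (fun s => c * a s)%C t (c * la)%C.
Proof.
  intros H. replace (c * la)%C with (0 * a t + c * la)%C by ring.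
  apply (is_derive_RC_mult (fun _ => c)); auto. apply is_derive_RC_const.
Qed.

Lemma is_derive_RC_line z a t : is_derive_RC (fun s => z + RtoC s * a)%C t a.
Proof. split; simpl; auto_derive; auto; ring_simplify; auto. Qed.

Lemma is_derive_RC_cexpi k t : is_derive_RC (fun s => cexpi (k * s)) t (Ci * RtoC k * cexpi (k * t))%C.
Proof. unfold cexpi. split; simpl; auto_derive; auto; ring. Qed.

Lemma is_derive_RC_increment_bound Z s0 dZ : is_derive_RC Z s0 dZ ->
  exists d : posreal, forall t, Rabs t < d -> Cmod (Z (s0 + t)%R - Z s0)%C <= (Cmod dZ + 1) * Rabs t.
Proof.
  rewrite is_derive_RC_eps. intros H. destruct (H (mkposreal 1 Rlt_0_1)) as [d Hd].
  exists d. intros t Ht. specialize (Hd t Ht). simpl in Hd.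
  replace (Z (s0 + t)%R - Z s0)%C with ((Z (s0 + t)%R - Z s0 - RtoC t * dZ) + RtoC t * dZ)%C
    by ring.
  eapply Rle_trans; [apply Cmod_triangle|]. rewrite Cmod_mult, Cmod_R. nra.
Qed.

Lemma is_derive_RC_comp (G : C -> C) (w : R -> C) t l dw :
  is_derive_C G (w t) l -> is_derive_RC w t dw -> is_derive_RC (fun s => G (w s)) t (l * dw)%C.
Proof.
  intros HG Hw. destruct (is_derive_RC_increment_bound w t dw Hw) as [d3 Hd3].
  rewrite is_derive_RC_eps in Hw |- *. intros eps.
  pose proof (Cmod_ge_0 dw). pose proof (Cmod_ge_0 l). pose proof (cond_pos eps).
  set (M := Cmod dw + 1).
  assert (P1 : 0 < eps / (2 * M)) by (apply Rdiv_lt_0_compat; unfold M; lra).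
  assert (P2 : 0 < eps / (2 * (Cmod l + 1))) by (apply Rdiv_lt_0_compat; lra).
  destruct (HG (mkposreal _ P1)) as [d1 Hd1].
  destruct (Hw (mkposreal _ P2)) as [d2 Hd2].
  assert (P3 : 0 < d1 / M) by (pose proof (cond_pos d1); apply Rdiv_lt_0_compat; unfold M; lra).
  exists (mkposreal _ (Rmin_pos _ _ (Rmin_pos _ _ (cond_pos d2) (cond_pos d3)) P3)).
  simpl. intros s Hs.
  pose proof (Rmin_l (Rmin d2 d3) (d1 / M)). pose proof (Rmin_r (Rmin d2 d3) (d1 / M)).
  pose proof (Rmin_l d2 d3). pose proof (Rmin_r d2 d3). pose proof (Rabs_pos s).
  specialize (Hd2 s ltac:(lra)). specialize (Hd3 s ltac:(lra)). simpl in Hd2.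
  set (k := (w (t + s)%R - w t)%C) in *.
  assert (Hk : Cmod k < d1).
  { eapply Rle_lt_trans; [apply Hd3|]. fold M.
    apply Rmult_lt_reg_l with (/ M); [apply Rinv_0_lt_compat; unfold M; lra|].
    rewrite <- Rmult_assoc, Rinv_l, Rmult_1_l by (unfold M; lra). rewrite Rmult_comm. lra. }
  specialize (Hd1 k Hk). simpl in Hd1.
  replace (w (t + s)%R) with (w t + k)%C by (unfold k; ring).
  replace (G (w t + k)%C - G (w t) - RtoC s * (l * dw))%C
    with ((G (w t + k)%C - G (w t) - l * k) + l * (w (t + s)%R - w t - RtoC s * dw))%C
    by (unfold k; ring).
  eapply Rle_trans; [apply Cmod_triangle|]. rewrite Cmod_mult.
  pose proof (Cmod_ge_0 k).
  assert (B1 : Cmod (G (w t + k)%C - G (w t) - l * k) <= eps / 2 * Rabs s).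
  { eapply Rle_trans; [apply Hd1|]. fold M in Hd3.
    replace (eps / 2 * Rabs s) with (eps / (2 * M) * (M * Rabs s)) by (field; unfold M; lra).
    apply Rmult_le_compat_l; lra. }
  assert (B2 : Cmod l * Cmod (w (t + s)%R - w t - RtoC s * dw) <= eps / 2 * Rabs s).
  { eapply Rle_trans; [apply Rmult_le_compat_l; [lra | apply Hd2]|].
    replace (Cmod l * (eps / (2 * (Cmod l + 1)) * Rabs s))
      with ((Cmod l / (Cmod l + 1)) * (eps / 2 * Rabs s)) by (field; lra).
    rewrite <- (Rmult_1_l (eps / 2 * Rabs s)) at 2.
    apply Rmult_le_compat_r; [nra|].
    apply Rmult_le_reg_r with (Cmod l + 1); [lra|].
    unfold Rdiv. rewrite Rmult_assoc, Rinv_l; lra. }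
  lra.
Qed.

Lemma is_derive_RC_inv a t la : a t <> RtoC 0 -> is_derive_RC a t la ->
  is_derive_RC (fun s => / a s)%C t (- la / (a t * a t))%C.
Proof.
  intros Hz H. replace (- la / (a t * a t))%C with (- / (a t * a t) * la)%C by (field; auto).
  apply (is_derive_RC_comp (fun w => / w)%C a); auto. apply is_derive_C_inv; auto.
Qed.

Lemma mean_value_ineq_RC (F dF : R -> C) (L : C) (e t0 h : R) :
  (forall c, Rabs (c - t0) <= Rabs h -> is_derive_RC F c (dF c) /\ Cmod (dF c - L)%C <= e) ->
  Cmod (F (t0 + h)%R - F t0 - RtoC h * L)%C <= 2 * e * Rabs h.
Proof.
  intros H.
  assert (Hh : Rabs (t0 + h - t0) <= Rabs h) by (replace (t0 + h - t0) with h by ring; lra).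
  destruct (MVT_cor4 (fun s => Re (F s)) (fun s => Re (dF s)) t0 (Rabs h)) with (b := t0 + h)
    as [c1 [E1 C1]]; [intros c Hc; apply H; auto | exact Hh|].
  destruct (MVT_cor4 (fun s => Im (F s)) (fun s => Im (dF s)) t0 (Rabs h)) with (b := t0 + h)
    as [c2 [E2 C2]]; [intros c Hc; apply H; auto | exact Hh|].
  replace (t0 + h - t0) with h in * by ring.
  destruct (H c1 C1) as [_ B1]. destruct (H c2 C2) as [_ B2].
  eapply Rle_trans; [apply Cmod_le_Rabs_Re_Im|].
  assert (R1 : Rabs (Re (F (t0 + h)%R - F t0 - RtoC h * L)%C) <= e * Rabs h).
  { replace (Re (F (t0 + h)%R - F t0 - RtoC h * L)%C) with (h * (Re (dF c1) - Re L))
      by (rewrite <- (Rmult_comm h) in E1; destruct (F (t0 + h)%R), (F t0), L; simpl in *; nra).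
    rewrite Rabs_mult, Rmult_comm. apply Rmult_le_compat_r; [apply Rabs_pos|].
    eapply Rle_trans; [|apply B1]. eapply Rle_trans; [|apply re_le_Cmod].
    destruct (dF c1), L; simpl; right; f_equal; ring. }
  assert (R2 : Rabs (Im (F (t0 + h)%R - F t0 - RtoC h * L)%C) <= e * Rabs h).
  { replace (Im (F (t0 + h)%R - F t0 - RtoC h * L)%C) with (h * (Im (dF c2) - Im L))
      by (rewrite <- (Rmult_comm h) in E2; destruct (F (t0 + h)%R), (F t0), L; simpl in *; nra).
    rewrite Rabs_mult, Rmult_comm. apply Rmult_le_compat_r; [apply Rabs_pos|].
    eapply Rle_trans; [|apply B2]. eapply Rle_trans; [|apply im_le_Cmod].
    destruct (dF c2), L; simpl; right; f_equal; ring. }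
  lra.
Qed.

Lemma is_derive_C_zero_const (G : C -> C) z0 (r : R) :
  (forall w, Cmod (w - z0)%C < r -> is_derive_C G w (RtoC 0)) ->
  forall w, Cmod (w - z0)%C < r -> G w = G z0.
Proof.
  intros HG w Hw.
  set (gam := fun t : R => (z0 + RtoC t * (w - z0))%C).
  assert (Hd : forall c, Rabs (c - 0) <= Rabs 1 ->
             is_derive_RC (fun t => G (gam t)) c (RtoC 0) /\ Cmod (RtoC 0 - RtoC 0)%C <= 0).
  { intros c Hc. rewrite Rminus_0_r, Rabs_R1 in Hc. split.
    - replace (RtoC 0) with (RtoC 0 * (w - z0))%C by ring.
      apply is_derive_RC_comp; [apply HG | apply is_derive_RC_line]. unfold gam.
      replace (z0 + RtoC c * (w - z0) - z0)%C with (RtoC c * (w - z0))%C by ring.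
      rewrite Cmod_mult, Cmod_R. pose proof (Cmod_ge_0 (w - z0)%C).
      apply Rle_lt_trans with (1 * Cmod (w - z0)%C); [apply Rmult_le_compat_r|]; lra.
    - replace (RtoC 0 - RtoC 0)%C with (RtoC 0) by ring. rewrite Cmod_0. lra. }
  pose proof (mean_value_ineq_RC _ _ _ _ _ _ Hd) as M.
  unfold gam in M. rewrite Rplus_0_l in M.
  replace (z0 + RtoC 1 * (w - z0))%C with w in M by ring.
  replace (z0 + RtoC 0 * (w - z0))%C with z0 in M by ring.
  assert (E : Cmod (G w - G z0 - RtoC 1 * RtoC 0)%C = 0)
    by (apply Rle_antisym; [lra | apply Cmod_ge_0]).
  apply Cmod_eq_0 in E. replace (G w) with ((G w - G z0 - RtoC 1 * RtoC 0) + G z0)%C by ring.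
  rewrite E. ring.
Qed.

(** * Directional derivatives on [C * R] *)

Definition vx : pt := (RtoC 1, 0).
Definition vy : pt := (Ci, 0).
Definition vu : pt := (RtoC 0, 1).

Lemma pt_eq (z1 z2 : C) (u1 u2 : R) : z1 = z2 -> u1 = u2 -> ((z1, u1) : pt) = (z2, u2).
Proof. intros; subst; auto. Qed.

Lemma dshift_dshift q v t s : dshift (dshift q v t) v s = dshift q v (t + s).
Proof. unfold dshift; simpl. apply pt_eq; [rewrite RtoC_plus|]; ring. Qed.

Lemma dshift_0 q v : dshift q v 0 = q.
Proof. destruct q. unfold dshift; simpl. apply pt_eq; ring. Qed.

Lemma dshift_comm q v w a b : dshift (dshift q v a) w b = dshift (dshift q w b) v a.
Proof. unfold dshift; simpl. apply pt_eq; ring. Qed.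

Lemma dshift_vx z u c : dshift (z, u) vx c = ((z + RtoC c)%C, u).
Proof. unfold dshift, vx; simpl. apply pt_eq; ring. Qed.

Lemma dshift_vu z u c : dshift (z, u) vu c = (z, u + c).
Proof. unfold dshift, vu; simpl. apply pt_eq; ring. Qed.

Lemma iterD_app vs1 vs2 g : iterD (vs1 ++ vs2) g = iterD vs1 (iterD vs2 g).
Proof. induction vs1 as [|v vs IH]; simpl; auto. rewrite IH; auto. Qed.

Lemma smooth_iterD U g vs : smooth_on U g -> smooth_on U (iterD vs g).
Proof. intros H vs'. rewrite <- iterD_app. apply H. Qed.

Lemma is_derive_shift (f : R -> R) t l : is_derive f 0 l -> is_derive (fun s => f (s - t)) t l.
Proof.
  intros H. replace l with (scal 1 l) by (unfold scal; simpl; unfold mult; simpl; ring).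
  apply (is_derive_comp f (fun s => s - t)); [|auto_derive; auto].
  replace (t - t) with 0 by ring. exact H.
Qed.

Lemma is_derive_RC_line_dirD g q v t : dirD_ex v g (dshift q v t) ->
  is_derive_RC (fun s => g (dshift q v s)) t (dirD v g (dshift q v t)).
Proof.
  intros [H1 H2].
  assert (E : forall s, dshift q v s = dshift (dshift q v t) v (s - t))
    by (intros s; rewrite dshift_dshift; f_equal; ring).
  split; eapply is_derive_ext; try (intros s; rewrite (E s); reflexivity);
    [apply is_derive_shift with (f := fun s => Re (g (dshift (dshift q v t) v s)))
    |apply is_derive_shift with (f := fun s => Im (g (dshift (dshift q v t) v s)))];
    apply Derive_correct; auto.
Qed.

Lemma dirD_of_is_derive_RC v g q l : is_derive_RC (fun s => g (dshift q v s)) 0 l ->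
  dirD_ex v g q /\ dirD v g q = l.
Proof.
  intros H. split; [apply (ex_derive_of_is_derive_RC _ _ _ H) | apply derC_of_is_derive_RC, H].
Qed.

Lemma increment_bound_dirD g q v b L e :
  (forall c, Rabs c <= Rabs b ->
     dirD_ex v g (dshift q v c) /\ Cmod (dirD v g (dshift q v c) - L)%C <= e) ->
  Cmod (g (dshift q v b) - g q - RtoC b * L)%C <= 2 * e * Rabs b.
Proof.
  intros H.
  pose proof (mean_value_ineq_RC (fun s => g (dshift q v s)) (fun s => dirD v g (dshift q v s))
    L e 0 b) as M.
  rewrite Rplus_0_l, dshift_0 in M. apply M.
  intros c Hc. rewrite Rminus_0_r in Hc. destruct (H c Hc) as [Hex Hb].
  split; [apply is_derive_RC_line_dirD|]; auto.
Qed.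

Lemma dshift_small q v (e : posreal) : exists d : posreal, forall s, Rabs s < d ->
  Cmod (fst (dshift q v s) - fst q)%C < e /\ Rabs (snd (dshift q v s) - snd q) < e.
Proof.
  pose proof (Cmod_ge_0 (fst v)); pose proof (Rabs_pos (snd v)).
  set (M := Cmod (fst v) + Rabs (snd v) + 1).
  assert (P : 0 < e / M) by (pose proof (cond_pos e); apply Rdiv_lt_0_compat; unfold M; lra).
  exists (mkposreal _ P). simpl. intros s Hs. unfold dshift; simpl.
  pose proof (Rabs_pos s).
  assert (Hs' : Rabs s * M < e).
  { apply Rmult_lt_reg_r with (/ M); [apply Rinv_0_lt_compat; unfold M; lra|].
    rewrite Rmult_assoc, Rinv_r, Rmult_1_r by (unfold M; lra). exact Hs. }
  unfold M in Hs'. split.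
  - replace (fst q + RtoC s * fst v - fst q)%C with (RtoC s * fst v)%C by ring.
    rewrite Cmod_mult, Cmod_R. nra.
  - replace (snd q + s * snd v - snd q) with (s * snd v) by ring. rewrite Rabs_mult. nra.
Qed.

Lemma open_pt_line U q v : open_pt U -> U q ->
  exists d : posreal, forall s, Rabs s < d -> U (dshift q v s).
Proof.
  intros HU Hq. destruct (HU q Hq) as [e He]. destruct (dshift_small q v e) as [d Hd].
  exists d. intros s Hs. destruct (Hd s Hs). destruct (dshift q v s). apply He; auto.
Qed.

Lemma open_pt_line_locally U q v : open_pt U -> U q -> locally 0 (fun s => U (dshift q v s)).
Proof.
  intros HU Hq. destruct (open_pt_line U q v HU Hq) as [d Hd]. exists d. intros s Hs.
  apply Hd. change (Rabs (s - 0) < d) in Hs. rewrite Rminus_0_r in Hs. exact Hs.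
Qed.

Lemma dirD_ext_loc U v G1 G2 q : open_pt U -> U q -> (forall q', U q' -> G1 q' = G2 q') ->
  dirD v G1 q = dirD v G2 q.
Proof.
  intros HU Hq HG. pose proof (open_pt_line_locally U q v HU Hq) as L.
  unfold dirD. f_equal; apply Derive_ext_loc;
    (eapply filter_imp; [|exact L]); intros s Hs; simpl; rewrite HG; auto.
Qed.

Lemma dirD_scal v G q c : dirD_ex v G q -> dirD v (fun q => c * G q)%C q = (c * dirD v G q)%C.
Proof.
  intros [H1 H2]. apply derC_of_is_derive_RC, is_derive_RC_scal, is_derive_RC_derC; auto.
Qed.

Lemma Rabs_sub_self_lt c (r : posreal) : Rabs (c - c) < r.
Proof. rewrite Rminus_eq_0, Rabs_R0. apply cond_pos. Qed.

Lemma Cmod_sub_self_lt z (r : posreal) : Cmod (z - z)%C < r.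
Proof. replace (z - z)%C with (RtoC 0) by ring. rewrite Cmod_0. apply cond_pos. Qed.

Lemma dirD_near U g v q (e : posreal) : open_pt U -> smooth_on U g -> U q ->
  exists r : posreal, forall q', Cmod (fst q' - fst q)%C < r -> Rabs (snd q' - snd q) < r ->
    U q' /\ dirD_ex v g q' /\ Cmod (dirD v g q' - dirD v g q)%C <= e.
Proof.
  intros HU Hg Hq. destruct (HU q Hq) as [e0 He0].
  destruct (proj1 (Hg (v :: nil)) q Hq e) as [d Hd]. simpl in Hd.
  exists (mkposreal _ (Rmin_pos _ _ (cond_pos e0) (cond_pos d))). simpl. intros q' H1 H2.
  pose proof (Rmin_l e0 d). pose proof (Rmin_r e0 d).
  assert (HUq : U q') by (destruct q' as [a b]; apply He0; simpl in *; lra).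
  split; [auto|]. split; [apply (proj2 (Hg nil)); auto|].
  left. apply Hd; lra.
Qed.

Lemma dirD_near_horizontal U g v z u (e : posreal) : open_pt U -> smooth_on U g -> U (z, u) ->
  exists r : posreal, forall m, Cmod m < r ->
    dirD_ex v g ((z + m)%C, u) /\ Cmod (dirD v g ((z + m)%C, u) - dirD v g (z, u))%C <= e.
Proof.
  intros HU Hg Hq. destruct (dirD_near U g v (z, u) e HU Hg Hq) as [r Hr].
  exists r. intros m Hm. apply Hr; simpl.
  - replace (z + m - z)%C with m by ring. exact Hm.
  - apply Rabs_sub_self_lt.
Qed.

Lemma locally_2d_box (e : posreal) (P : R -> R -> Prop) :
  (forall u v, Rabs u < e -> Rabs v < e -> P u v) -> locally_2d P 0 0.
Proof. intros H. exists e. intros u v Hu Hv. rewrite !Rminus_0_r in *. auto. Qed.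

Lemma Schwarz_box (F G1 G2 H12 H21 : R -> R -> R) (d : posreal) :
  (forall a b, Rabs a < d -> Rabs b < d ->
     is_derive (fun z => F z b) a (G1 a b) /\ is_derive (fun t => F a t) b (G2 a b) /\
     is_derive (fun z => G2 z b) a (H12 a b) /\ is_derive (fun t => G1 a t) b (H21 a b)) ->
  continuity_2d_pt H12 0 0 -> continuity_2d_pt H21 0 0 -> H12 0 0 = H21 0 0.
Proof.
  intros HD C12 C21.
  assert (Pd : 0 < d / 2) by (pose proof (cond_pos d); lra).
  set (d2 := mkposreal _ Pd).
  assert (L12 : forall u v, Rabs u < d2 -> Rabs v < d2 ->
     is_derive (fun z => Derive (fun t => F z t) v) u (H12 u v)).
  { intros u v Hu Hv. simpl in Hu, Hv. eapply is_derive_ext_loc; [|apply (HD u v); lra].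
    exists d2. intros z Hz. change (Rabs (z - u) < d2) in Hz. simpl in Hz.
    pose proof (Rabs_triang_inv z u).
    symmetry. apply is_derive_unique. apply HD; lra. }
  assert (L21 : forall u v, Rabs u < d2 -> Rabs v < d2 ->
     is_derive (fun z => Derive (fun t => F t z) u) v (H21 u v)).
  { intros u v Hu Hv. simpl in Hu, Hv. eapply is_derive_ext_loc; [|apply (HD u v); lra].
    exists d2. intros z Hz. change (Rabs (z - v) < d2) in Hz. simpl in Hz.
    pose proof (Rabs_triang_inv z v).
    symmetry. apply is_derive_unique. apply HD; lra. }
  assert (R0 : Rabs 0 < d2) by (rewrite Rabs_R0; apply cond_pos).
  rewrite <- (is_derive_unique _ _ _ (L12 0 0 R0 R0)).
  rewrite <- (is_derive_unique _ _ _ (L21 0 0 R0 R0)).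
  apply Schwarz.
  - apply (locally_2d_box d2). intros u v Hu Hv. simpl in Hu, Hv.
    assert (Hu' : Rabs u < d) by lra. assert (Hv' : Rabs v < d) by lra.
    destruct (HD u v Hu' Hv') as (D1 & D2 & _ & _).
    split; [eexists; exact D1|]. split; [eexists; exact D2|].
    split; eexists; [apply L12 | apply L21]; auto.
  - apply continuity_2d_pt_ext_loc with H12; auto.
    apply (locally_2d_box d2). intros u v Hu Hv. symmetry. apply is_derive_unique, L12; auto.
  - apply continuity_2d_pt_ext_loc with H21; auto.
    apply (locally_2d_box d2). intros u v Hu Hv. symmetry. apply is_derive_unique, L21; auto.
Qed.

Lemma dshift2_small q v w (e : posreal) : exists d : posreal, forall a b, Rabs a < d -> Rabs b < d ->
  Cmod (fst (dshift (dshift q v a) w b) - fst q)%C < e /\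
  Rabs (snd (dshift (dshift q v a) w b) - snd q) < e.
Proof.
  pose proof (Cmod_ge_0 (fst v)); pose proof (Cmod_ge_0 (fst w));
  pose proof (Rabs_pos (snd v)); pose proof (Rabs_pos (snd w)).
  set (M := Cmod (fst v) + Cmod (fst w) + Rabs (snd v) + Rabs (snd w) + 1).
  assert (P : 0 < e / (2 * M)) by (pose proof (cond_pos e); apply Rdiv_lt_0_compat; unfold M; lra).
  exists (mkposreal _ P). simpl. intros a b Ha Hb. unfold dshift; simpl.
  pose proof (Rabs_pos a); pose proof (Rabs_pos b).
  assert (Small : forall x, Rabs x < e / (2 * M) -> Rabs x * M < e / 2).
  { intros x Hx. apply Rmult_lt_reg_r with (/ M); [apply Rinv_0_lt_compat; unfold M; lra|].
    rewrite Rmult_assoc, Rinv_r, Rmult_1_r by (unfold M; lra).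
    replace (e / 2 * / M) with (e / (2 * M)) by (field; unfold M; lra). exact Hx. }
  pose proof (Small a Ha). pose proof (Small b Hb). unfold M in *.
  split.
  - replace (fst q + RtoC a * fst v + RtoC b * fst w - fst q)%C
      with (RtoC a * fst v + RtoC b * fst w)%C by ring.
    eapply Rle_lt_trans; [apply Cmod_triangle|]. rewrite !Cmod_mult, !Cmod_R. nra.
  - replace (snd q + a * snd v + b * snd w - snd q) with (a * snd v + b * snd w) by ring.
    eapply Rle_lt_trans; [apply Rabs_triang|]. rewrite !Rabs_mult. nra.
Qed.

Section DirectionalSymmetry.

Variable proj : C -> R.
Hypothesis is_derive_proj :
  forall a t l, is_derive_RC a t l -> is_derive (fun s => proj (a s)) t (proj l).
Hypothesis proj_lipschitz : forall x y, Rabs (proj x - proj y) <= Cmod (x - y)%C.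

Lemma dirD_comm_proj U g v w q : open_pt U -> smooth_on U g -> U q ->
  proj (dirD v (dirD w g) q) = proj (dirD w (dirD v g) q).
Proof.
  intros HU Hg Hq.
  destruct (HU q Hq) as [e0 He0]. destruct (dshift2_small q v w e0) as [d Hd].
  set (P := fun a b => dshift (dshift q v a) w b).
  assert (HP : forall a b, Rabs a < d -> Rabs b < d -> U (P a b)).
  { intros a b Ha Hb. destruct (Hd a b Ha Hb) as [X Y]. unfold P in *.
    destruct (dshift (dshift q v a) w b). apply He0; auto. }
  assert (P00 : P 0 0 = q) by (unfold P; rewrite !dshift_0; auto).
  assert (Hcomm : forall a b, P a b = dshift (dshift q w b) v a) by (intros; apply dshift_comm).
  assert (Cont : forall vs, continuity_2d_pt (fun a b => proj (iterD vs g (P a b))) 0 0).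
  { intros vs eps. destruct (proj1 (Hg vs) q Hq eps) as [dc Hdc].
    destruct (dshift2_small q v w dc) as [d2 Hd2]. exists d2. intros a b Ha Hb.
    rewrite Rminus_0_r in Ha, Hb. rewrite P00.
    eapply Rle_lt_trans; [apply proj_lipschitz | apply Hdc; apply Hd2; auto]. }
  pose proof (Schwarz_box (fun a b => proj (g (P a b))) (fun a b => proj (dirD v g (P a b)))
    (fun a b => proj (dirD w g (P a b))) (fun a b => proj (dirD v (dirD w g) (P a b)))
    (fun a b => proj (dirD w (dirD v g) (P a b))) d) as S.
  cbv beta in S. rewrite P00 in S. apply S; clear S;
    [| apply (Cont (v :: w :: nil)) | apply (Cont (w :: v :: nil))].
  intros a b Ha Hb. pose proof (HP a b Ha Hb) as Hab.
  split; [|split; [|split]].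
  - eapply is_derive_ext; [intros z; rewrite (Hcomm z b); reflexivity|].
    rewrite (Hcomm a b). apply is_derive_proj, is_derive_RC_line_dirD. rewrite <- Hcomm.
    apply (proj2 (Hg nil)); auto.
  - apply is_derive_proj, is_derive_RC_line_dirD. apply (proj2 (Hg nil)); auto.
  - eapply is_derive_ext; [intros z; rewrite (Hcomm z b); reflexivity|].
    rewrite (Hcomm a b). apply is_derive_proj, (is_derive_RC_line_dirD (dirD w g)).
    rewrite <- Hcomm. apply (proj2 (Hg (w :: nil))); auto.
  - apply is_derive_proj, (is_derive_RC_line_dirD (dirD v g)). apply (proj2 (Hg (v :: nil))); auto.
Qed.

End DirectionalSymmetry.

Lemma dirD_comm U g v w q : open_pt U -> smooth_on U g -> U q ->
  dirD v (dirD w g) q = dirD w (dirD v g) q.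
Proof.
  intros HU Hg Hq. apply injective_projections; [apply (dirD_comm_proj Re) with U | apply (dirD_comm_proj Im) with U];
    auto; try (intros a t l [H1 H2]; auto); intros x y;
    [eapply Rle_trans; [|apply re_le_Cmod] | eapply Rle_trans; [|apply im_le_Cmod]];
    destruct x, y; simpl; right; f_equal; ring.
Qed.

Definition cauchy_riemann (g : pt -> C) (q : pt) : Prop := dirD vy g q = (Ci * dirD vx g q)%C.

Lemma Cmod_pair_le (a b c : R) : Rabs c <= Rabs b -> Cmod ((a, c) : C) <= Cmod ((a, b) : C).
Proof.
  intros H. unfold Cmod; simpl. apply sqrt_le_1_alt.
  assert (E1 : c * c = Rabs c * Rabs c) by (rewrite <- Rabs_mult, Rabs_right; nra).
  assert (E2 : b * b = Rabs b * Rabs b) by (rewrite <- Rabs_mult, Rabs_right; nra).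
  pose proof (Rabs_pos c). nra.
Qed.

Lemma is_derive_C_of_cauchy_riemann U g q : open_pt U -> smooth_on U g -> U q ->
  cauchy_riemann g q -> is_derive_C (fun w => g (w, snd q)) (fst q) (dirD vx g q).
Proof.
  intros HU Hg Hq HCR. destruct q as [z u]. simpl. intros eps.
  assert (Pe : 0 < eps / 4) by (pose proof (cond_pos eps); lra).
  destruct (dirD_near_horizontal U g vx z u (mkposreal _ Pe) HU Hg Hq) as [rx Hrx].
  destruct (dirD_near_horizontal U g vy z u (mkposreal _ Pe) HU Hg Hq) as [ry Hry].
  simpl in Hrx, Hry. rewrite HCR in Hry. set (l := dirD vx g (z, u)) in *.
  exists (mkposreal _ (Rmin_pos _ _ (cond_pos rx) (cond_pos ry))). simpl. intros k Hk.
  pose proof (Rmin_l rx ry). pose proof (Rmin_r rx ry).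
  set (a := Re k). set (b := Im k).
  assert (Ha : Rabs a <= Cmod k) by apply re_le_Cmod.
  assert (Hb : Rabs b <= Cmod k) by apply im_le_Cmod.
  assert (Ek : k = (RtoC a + RtoC b * Ci)%C)
    by (unfold a, b; destruct k; apply injective_projections; simpl; ring).
  assert (SA : Cmod (g ((z + RtoC a)%C, u) - g (z, u) - RtoC a * l)%C <= 2 * (eps / 4) * Rabs a).
  { rewrite <- dshift_vx. apply increment_bound_dirD. intros c Hc. rewrite dshift_vx.
    apply Hrx. rewrite Cmod_R. lra. }
  assert (SB : Cmod (g ((z + k)%C, u) - g ((z + RtoC a)%C, u) - RtoC b * (Ci * l))%C
                <= 2 * (eps / 4) * Rabs b).
  { replace ((z + k)%C, u) with (dshift ((z + RtoC a)%C, u) vy b)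
      by (unfold dshift, vy; simpl; apply pt_eq; [rewrite Ek|]; ring).
    apply increment_bound_dirD. intros c Hc.
    replace (dshift ((z + RtoC a)%C, u) vy c) with ((z + (a, c))%C, u)
      by (unfold dshift, vy; simpl; apply pt_eq;
          [apply injective_projections; simpl |]; ring).
    apply Hry. eapply Rle_lt_trans; [apply Cmod_pair_le; eauto|].
    replace ((a, b) : C) with k by (unfold a, b; destruct k; reflexivity). lra. }
  replace (g ((z + k)%C, u) - g (z, u) - l * k)%C with
    ((g ((z + k)%C, u) - g ((z + RtoC a)%C, u) - RtoC b * (Ci * l)) +
     (g ((z + RtoC a)%C, u) - g (z, u) - RtoC a * l))%C by (rewrite Ek at 3; ring).
  eapply Rle_trans; [apply Cmod_triangle|].
  assert (eps / 4 * Rabs a <= eps / 4 * Cmod k) by (apply Rmult_le_compat_l; lra).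
  assert (eps / 4 * Rabs b <= eps / 4 * Cmod k) by (apply Rmult_le_compat_l; lra).
  lra.
Qed.

Lemma dirD_horizontal_of_is_derive_C g q a l : is_derive_C (fun w => g (w, snd q)) (fst q) l ->
  dirD (a, 0) g q = (l * a)%C.
Proof.
  intros H. apply (dirD_of_is_derive_RC (a, 0)).
  pose proof (is_derive_RC_comp (fun w => g (w, snd q)) (fun s => fst q + RtoC s * a)%C 0 l a)
    as M.
  cbv beta in M. replace (fst q + RtoC 0 * a)%C with (fst q) in M by ring.
  specialize (M H (is_derive_RC_line _ _ _)).
  eapply is_derive_RC_ext_loc; [|exact M]. apply filter_forall. intros s.
  unfold dshift; simpl. f_equal. apply pt_eq; auto. ring.
Qed.

Lemma open_pt_slice U q : open_pt U -> U q ->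
  exists r : posreal, forall w, Cmod (w - fst q)%C < r -> U (w, snd q).
Proof.
  intros HU Hq. destruct (HU q Hq) as [e He]. exists e. intros w Hw. apply He; auto.
  rewrite Rminus_eq_0, Rabs_R0. apply cond_pos.
Qed.

Lemma Dz_of_slice (G : pt -> C) (H : C -> C) q l :
  (exists r : posreal, forall w, Cmod (w - fst q)%C < r -> G (w, snd q) = H w) ->
  is_derive_C H (fst q) l -> Dz G q = l.
Proof.
  intros [r Hr] Hd. apply C_derive_of_is_derive_C.
  apply is_derive_C_ext_loc with H; auto. exists r. intros w Hw. symmetry. auto.
Qed.

Definition zderiv (k : nat) (f : pt -> C) : pt -> C := iterD (repeat vx k) f.

Section HolomorphicInZeta.

Variable U : pt -> Prop.
Variable f : pt -> C.
Hypothesis HU : open_pt U.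
Hypothesis Hs : smooth_on U f.
Hypothesis Hh : holo_in_zeta_on U f.

Lemma cauchy_riemann_iterD vs q : U q -> cauchy_riemann (iterD vs f) q.
Proof.
  revert q. induction vs as [|v vs IH]; intros q Hq.
  - pose proof (is_derive_C_of_C_diff _ _ (Hh q Hq)) as H.
    unfold cauchy_riemann, vx, vy.
    rewrite !(dirD_horizontal_of_is_derive_C f q _ _ H). ring.
  - assert (HG : smooth_on U (iterD vs f)) by (apply smooth_iterD; auto).
    unfold cauchy_riemann. simpl.
    rewrite (dirD_comm U (iterD vs f) vy v q HU HG Hq).
    rewrite (dirD_ext_loc U v (dirD vy (iterD vs f)) (fun q' => Ci * dirD vx (iterD vs f) q')%C q HU Hq)
      by (intros q' Hq'; apply IH; auto).
    rewrite dirD_scal by (apply (proj2 (HG (vx :: nil))); auto).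
    rewrite (dirD_comm U (iterD vs f) v vx q HU HG Hq). reflexivity.
Qed.

Lemma is_derive_C_iterD vs q : U q ->
  is_derive_C (fun w => iterD vs f (w, snd q)) (fst q) (iterD (vx :: vs) f q).
Proof.
  intros Hq. apply is_derive_C_of_cauchy_riemann with U; auto.
  - apply smooth_iterD; auto.
  - apply cauchy_riemann_iterD; auto.
Qed.

Lemma Dz_iterD G vs q : (forall q', U q' -> G q' = iterD vs f q') -> U q ->
  Dz G q = iterD (vx :: vs) f q.
Proof.
  intros HG Hq. apply Dz_of_slice with (fun w => iterD vs f (w, snd q));
    [|apply is_derive_C_iterD; auto].
  destruct (open_pt_slice U q HU Hq) as [r Hr]. exists r. intros w Hw. apply HG, Hr, Hw.
Qed.

Lemma iter_Dz_zderiv k q : U q -> Nat.iter k Dz f q = zderiv k f q.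
Proof.
  revert q. induction k as [|k IH]; intros q Hq; [reflexivity|].
  apply (Dz_iterD _ (repeat vx k)); auto.
Qed.

Lemma phi_of_zderiv q : U q -> phi_of f q = (zderiv 3 f q / zderiv 2 f q)%C.
Proof. intros Hq. unfold phi_of. rewrite <- !iter_Dz_zderiv by auto. reflexivity. Qed.

Lemma psi_of_zderiv q : U q -> psi_of f q = (dirD vu (zderiv 2 f) q / zderiv 2 f q)%C.
Proof.
  intros Hq. unfold psi_of, Du. rewrite <- (iter_Dz_zderiv 2) by auto. f_equal.
  apply dirD_ext_loc with U; auto. intros. apply (iter_Dz_zderiv 2); auto.
Qed.

End HolomorphicInZeta.

(** * Smoothness on real intervals *)

Definition derivable_on (I : R -> Prop) (a : R -> C) : Prop :=
  forall t, I t -> ex_derive (fun s => Re (a s)) t /\ ex_derive (fun s => Im (a s)) t.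

Definition derivable_upto (I : R -> Prop) (n : nat) (a : R -> C) : Prop :=
  forall k, (k <= n)%nat -> derivable_on I (Nat.iter k derC a).

Lemma smooth_R_on_of_derivable_upto I a : (forall n, derivable_upto I n a) -> smooth_R_on I a.
Proof. intros H n t Ht. apply (H n n); auto. Qed.

Lemma open_R_locally I t : open_R I -> I t -> locally t I.
Proof.
  intros HI Ht. destruct (HI t Ht) as [e He]. exists e. intros s Hs. apply He, Hs.
Qed.

Lemma is_derive_RC_derivable_on I a t : derivable_on I a -> I t -> is_derive_RC a t (derC a t).
Proof. intros H Ht. destruct (H t Ht). apply is_derive_RC_derC; auto. Qed.

Lemma derivable_on_of_is_derive_RC I a (da : R -> C) :
  (forall t, I t -> is_derive_RC a t (da t)) -> derivable_on I a.
Proof. intros H t Ht. apply (ex_derive_of_is_derive_RC _ _ _ (H t Ht)). Qed.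

Lemma derivable_upto_sub (I1 I2 : R -> Prop) n a :
  (forall t, I2 t -> I1 t) -> derivable_upto I1 n a -> derivable_upto I2 n a.
Proof. intros H Ha k Hk t Ht. apply Ha; auto. Qed.

Section DerivableUpto.

Variable I : R -> Prop.
Hypothesis HI : open_R I.

Lemma derC_ext a b t : (forall s, I s -> a s = b s) -> I t -> derC a t = derC b t.
Proof.
  intros H Ht. unfold derC. f_equal; apply Derive_ext_loc;
    (eapply filter_imp; [|apply (open_R_locally I t HI Ht)]); intros s Hs; simpl; rewrite H; auto.
Qed.

Lemma iter_derC_ext a b k : (forall s, I s -> a s = b s) -> forall t, I t ->
  Nat.iter k derC a t = Nat.iter k derC b t.
Proof.
  revert a b. induction k as [|k IH]; intros a b H t Ht; [simpl; auto|].
  rewrite !Nat.iter_succ_r. apply IH; auto. intros s Hs. apply derC_ext; auto.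
Qed.

Lemma derivable_on_ext a b : (forall s, I s -> a s = b s) -> derivable_on I a -> derivable_on I b.
Proof.
  intros H Ha t Ht. destruct (Ha t Ht) as [H1 H2].
  split; [eapply ex_derive_ext_loc; [|exact H1] | eapply ex_derive_ext_loc; [|exact H2]];
    (eapply filter_imp; [|apply (open_R_locally I t HI Ht)]); intros s Hs; simpl; rewrite H; auto.
Qed.

Lemma derivable_upto_ext n a b : (forall s, I s -> a s = b s) ->
  derivable_upto I n a -> derivable_upto I n b.
Proof.
  intros H Ha k Hk. apply derivable_on_ext with (Nat.iter k derC a); auto.
  apply iter_derC_ext; auto.
Qed.

Lemma derivable_upto_S_inv n a : derivable_upto I (S n) a ->
  derivable_on I a /\ derivable_upto I n (derC a).
Proof.
  intros H. split; [apply (H 0%nat); lia|].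
  intros k Hk. rewrite <- Nat.iter_succ_r. apply H. lia.
Qed.

Lemma derivable_upto_le n a : derivable_upto I (S n) a -> derivable_upto I n a.
Proof. intros H k Hk. apply H. lia. Qed.

Lemma derivable_upto_of_deriv n a da : (forall t, I t -> is_derive_RC a t (da t)) ->
  derivable_upto I n da -> derivable_upto I (S n) a.
Proof.
  intros H Hd k Hk. destruct k as [|k]; [apply derivable_on_of_is_derive_RC with da; auto|].
  rewrite Nat.iter_succ_r.
  refine (derivable_upto_ext n da (derC a) _ Hd k _); [|lia].
  intros s Hs. symmetry. apply derC_of_is_derive_RC; auto.
Qed.

Lemma derivable_upto_of_deriv_all a da : (forall t, I t -> is_derive_RC a t (da t)) ->
  (forall n, derivable_upto I n da) -> forall n, derivable_upto I n a.
Proof.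
  intros H Hd [|n]; [|apply derivable_upto_of_deriv with da; auto].
  intros k Hk. replace k with 0%nat by lia. apply derivable_on_of_is_derive_RC with da; auto.
Qed.

Lemma derivable_upto_const c n : derivable_upto I n (fun _ => c).
Proof.
  revert c. induction n as [|n IH]; intros c k Hk.
  - replace k with 0%nat by lia. apply derivable_on_of_is_derive_RC with (fun _ => RtoC 0).
    intros; apply is_derive_RC_const.
  - revert k Hk. apply derivable_upto_of_deriv with (fun _ => RtoC 0); auto.
    intros; apply is_derive_RC_const.
Qed.

Lemma derivable_upto_plus n : forall a b, derivable_upto I n a -> derivable_upto I n b ->
  derivable_upto I n (fun t => a t + b t)%C.
Proof.
  induction n as [|n IH]; intros a b Ha Hb.
  - intros k Hk. replace k with 0%nat by lia.
    apply derivable_on_of_is_derive_RC with (fun t => derC a t + derC b t)%C.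
    intros t Ht. apply is_derive_RC_plus; apply is_derive_RC_derivable_on with I; auto;
      [apply (Ha 0%nat) | apply (Hb 0%nat)]; lia.
  - destruct (derivable_upto_S_inv _ _ Ha) as [Ha0 Ha1].
    destruct (derivable_upto_S_inv _ _ Hb) as [Hb0 Hb1].
    apply derivable_upto_of_deriv with (fun t => derC a t + derC b t)%C; auto.
    intros t Ht. apply is_derive_RC_plus; apply is_derive_RC_derivable_on with I; auto.
Qed.

Lemma derivable_upto_mult n : forall a b, derivable_upto I n a -> derivable_upto I n b ->
  derivable_upto I n (fun t => a t * b t)%C.
Proof.
  induction n as [|n IH]; intros a b Ha Hb.
  - intros k Hk. replace k with 0%nat by lia.
    apply derivable_on_of_is_derive_RC with (fun t => derC a t * b t + a t * derC b t)%C.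
    intros t Ht. apply is_derive_RC_mult; apply is_derive_RC_derivable_on with I; auto;
      [apply (Ha 0%nat) | apply (Hb 0%nat)]; lia.
  - destruct (derivable_upto_S_inv _ _ Ha) as [Ha0 Ha1].
    destruct (derivable_upto_S_inv _ _ Hb) as [Hb0 Hb1].
    apply derivable_upto_of_deriv with (fun t => derC a t * b t + a t * derC b t)%C.
    + intros t Ht. apply is_derive_RC_mult; apply is_derive_RC_derivable_on with I; auto.
    + apply derivable_upto_plus; apply IH; auto; apply derivable_upto_le; auto.
Qed.

Lemma derivable_upto_scal n c a : derivable_upto I n a -> derivable_upto I n (fun t => c * a t)%C.
Proof. intros. apply derivable_upto_mult; auto. apply derivable_upto_const. Qed.

Lemma derivable_upto_inv n : forall a, (forall t, I t -> a t <> RtoC 0) ->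
  derivable_upto I n a -> derivable_upto I n (fun t => / a t)%C.
Proof.
  induction n as [|n IH]; intros a Hz Ha.
  - intros k Hk. replace k with 0%nat by lia.
    apply derivable_on_of_is_derive_RC with (fun t => - derC a t / (a t * a t))%C.
    intros t Ht. apply is_derive_RC_inv; auto.
    apply is_derive_RC_derivable_on with I; auto. apply (Ha 0%nat); lia.
  - destruct (derivable_upto_S_inv _ _ Ha) as [Ha0 Ha1].
    apply derivable_upto_of_deriv with (fun t => (- RtoC 1) * derC a t * (/ a t * / a t))%C.
    + intros t Ht.
      replace (- RtoC 1 * derC a t * (/ a t * / a t))%C with (- derC a t / (a t * a t))%C
        by (field; auto).
      apply is_derive_RC_inv; auto. apply is_derive_RC_derivable_on with I; auto.
    + apply derivable_upto_mult; [apply derivable_upto_scal; auto|].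
      apply derivable_upto_mult; apply IH; auto; apply derivable_upto_le; auto.
Qed.

Lemma derivable_upto_cexpi k n : derivable_upto I n (fun t => cexpi (k * t)).
Proof.
  induction n as [|n IH].
  - intros j Hj. replace j with 0%nat by lia.
    apply derivable_on_of_is_derive_RC with (fun t => Ci * RtoC k * cexpi (k * t))%C.
    intros; apply is_derive_RC_cexpi.
  - apply derivable_upto_of_deriv with (fun t => Ci * RtoC k * cexpi (k * t))%C.
    + intros; apply is_derive_RC_cexpi.
    + apply derivable_upto_scal; auto.
Qed.

Lemma derivable_upto_holo_comp (G : nat -> C -> C) (D : C -> Prop) (w : R -> C) :
  (forall k z, D z -> is_derive_C (G k) z (G (S k) z)) ->
  (forall t, I t -> D (w t)) -> (forall n, derivable_upto I n w) ->
  forall n k, derivable_upto I n (fun t => G k (w t)).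
Proof.
  intros HG HD Hw n. induction n as [|n IH]; intros k.
  - intros j Hj. replace j with 0%nat by lia.
    apply derivable_on_of_is_derive_RC with (fun t => G (S k) (w t) * derC w t)%C.
    intros t Ht. apply is_derive_RC_comp; [apply HG; auto|].
    apply is_derive_RC_derivable_on with I; auto. apply (Hw 0%nat 0%nat); lia.
  - apply derivable_upto_of_deriv with (fun t => G (S k) (w t) * derC w t)%C.
    + intros t Ht. apply is_derive_RC_comp; [apply HG; auto|].
      apply is_derive_RC_derivable_on with I; auto. apply (Hw 0%nat 0%nat); lia.
    + apply derivable_upto_mult; auto. apply (derivable_upto_S_inv _ _ (Hw (S n))).
Qed.

End DerivableUpto.

Lemma is_derive_RC_vertical_slice g z c : dirD_ex vu g (z, c) ->
  is_derive_RC (fun s => g (z, s)) c (dirD vu g (z, c)).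
Proof.
  intros H.
  assert (E : forall s, dshift (z, 0) vu s = (z, s)) by (intros s; rewrite dshift_vu; f_equal; ring).
  pose proof (is_derive_RC_line_dirD g (z, 0) vu c) as L. rewrite E in L.
  eapply is_derive_RC_ext_loc; [|exact (L H)]. apply filter_forall. intros s. rewrite E. auto.
Qed.

Lemma derivable_upto_vertical_slice U z I (HI : open_R I) n : forall g, smooth_on U g ->
  (forall t, I t -> U (z, t)) -> derivable_upto I n (fun t => g (z, t)).
Proof.
  induction n as [|n IH]; intros g Hg HzI.
  - intros k Hk. replace k with 0%nat by lia.
    apply derivable_on_of_is_derive_RC with (fun t => dirD vu g (z, t)).
    intros t Ht. apply is_derive_RC_vertical_slice, (proj2 (Hg nil)); auto.
  - apply derivable_upto_of_deriv with (fun t => dirD vu g (z, t)); auto.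
    + intros t Ht. apply is_derive_RC_vertical_slice, (proj2 (Hg nil)); auto.
    + apply (IH (dirD vu g)); auto. apply (smooth_iterD U g (vu :: nil)); auto.
Qed.

Lemma is_derive_RC_along_curve U g Z s0 dZ : open_pt U -> smooth_on U g ->
  U (Z s0, s0) -> cauchy_riemann g (Z s0, s0) -> is_derive_RC Z s0 dZ ->
  is_derive_RC (fun s => g (Z s, s)) s0 (dirD vx g (Z s0, s0) * dZ + dirD vu g (Z s0, s0))%C.
Proof.
  intros HU Hg Hq HCR HZ.
  assert (HM : is_derive_RC (fun s => g (Z s, s0)) s0 (dirD vx g (Z s0, s0) * dZ)%C).
  { apply (is_derive_RC_comp (fun w => g (w, s0)) Z s0); auto.
    apply (is_derive_C_of_cauchy_riemann U g (Z s0, s0)); auto. }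
  rewrite is_derive_RC_eps in HM |- *. intros eps.
  assert (Pe : 0 < eps / 2) by (pose proof (cond_pos eps); lra).
  assert (Pe4 : 0 < eps / 4) by (pose proof (cond_pos eps); lra).
  destruct (HM (mkposreal _ Pe)) as [d1 Hd1].
  destruct (dirD_near U g vu _ (mkposreal _ Pe4) HU Hg Hq) as [m Hm]. simpl in Hm.
  destruct (is_derive_RC_increment_bound Z s0 dZ HZ) as [d2 Hd2].
  pose proof (Cmod_ge_0 dZ).
  assert (Pm : 0 < m / (Cmod dZ + 1)) by (apply Rdiv_lt_0_compat; [apply cond_pos | lra]).
  exists (mkposreal _ (Rmin_pos _ _ (Rmin_pos _ _ (cond_pos d1) (cond_pos d2)) Pm)). simpl.
  intros t Ht.
  pose proof (Rmin_l (Rmin d1 d2) (m / (Cmod dZ + 1))).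
  pose proof (Rmin_r (Rmin d1 d2) (m / (Cmod dZ + 1))).
  pose proof (Rmin_l d1 d2). pose proof (Rmin_r d1 d2).
  assert (Ht3 : Rabs t * (Cmod dZ + 1) < m).
  { apply Rmult_lt_reg_r with (/ (Cmod dZ + 1)); [apply Rinv_0_lt_compat; lra|].
    rewrite Rmult_assoc, Rinv_r, Rmult_1_r by lra. lra. }
  assert (HZt : Cmod (Z (s0 + t)%R - Z s0)%C < m)
    by (eapply Rle_lt_trans; [apply Hd2; lra|]; rewrite Rmult_comm; exact Ht3).
  assert (Htm : Rabs t < m) by (pose proof (Rabs_pos t); nra).
  set (z' := Z (s0 + t)%R) in *.
  assert (S1 : Cmod (g (z', (s0 + t)%R) - g (z', s0) - RtoC t * dirD vu g (Z s0, s0))%C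
                 <= 2 * (eps / 4) * Rabs t).
  { rewrite <- dshift_vu. apply increment_bound_dirD. intros c Hc. rewrite dshift_vu.
    apply Hm; simpl; [|replace (s0 + c - s0) with c by ring]; lra. }
  assert (Ht1 : Rabs t < d1) by lra.
  specialize (Hd1 t Ht1). simpl in Hd1. fold z' in Hd1.
  replace (g (z', (s0 + t)%R) - g (Z s0, s0) -
      RtoC t * (dirD vx g (Z s0, s0) * dZ + dirD vu g (Z s0, s0)))%C with
    ((g (z', (s0 + t)%R) - g (z', s0) - RtoC t * dirD vu g (Z s0, s0)) +
     (g (z', s0) - g (Z s0, s0) - RtoC t * (dirD vx g (Z s0, s0) * dZ)))%C by ring.
  eapply Rle_trans; [apply Cmod_triangle|]. lra.
Qed.

Lemma cexpi_add a b : (cexpi a * cexpi b)%C = cexpi (a + b).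
Proof. unfold cexpi. apply injective_projections; simpl; rewrite ?cos_plus, ?sin_plus; ring. Qed.

Lemma cexpi_0 : cexpi 0 = RtoC 1.
Proof. unfold cexpi. rewrite cos_0, sin_0. reflexivity. Qed.

Lemma cexpi_opp_r x : (cexpi x * cexpi (- x))%C = RtoC 1.
Proof. rewrite cexpi_add, Rplus_opp_r. apply cexpi_0. Qed.

Lemma Cmod_cexpi a : Cmod (cexpi a) = 1.
Proof.
  unfold cexpi, Cmod; simpl. rewrite !Rmult_1_r.
  pose proof (sin2_cos2 a) as H. unfold Rsqr in H.
  replace (cos a * cos a + sin a * sin a) with 1 by lra. apply sqrt_1.
Qed.

Lemma cexpi_neq_0 a : cexpi a <> RtoC 0.
Proof. intros H. pose proof (Cmod_cexpi a) as E. rewrite H, Cmod_0 in E. lra. Qed.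

Lemma Cmod_cexpi_sub_1 x : Cmod (cexpi x - RtoC 1)%C <= 2 * Rabs x.
Proof.
  pose proof (mean_value_ineq_RC (fun s => cexpi (1 * s)) (fun s => Ci * RtoC 1 * cexpi (1 * s))%C
    (RtoC 0) 1 0 x) as M.
  rewrite Rplus_0_l, Rmult_0_r, cexpi_0, Rmult_1_l, Rmult_1_r in M.
  replace (cexpi x - RtoC 1)%C with (cexpi x - RtoC 1 - RtoC x * RtoC 0)%C by ring.
  apply M. intros c _. split; [apply is_derive_RC_cexpi|].
  replace (Ci * RtoC 1 * cexpi (1 * c) - RtoC 0)%C with (Ci * cexpi (1 * c))%C by ring.
  rewrite Cmod_mult, Cmod_cexpi, Cmod_Ci. lra.
Qed.

(** * The invariant [kappa] *)

Definition kappa (lambda : R) (f : pt -> C) (q : pt) : C :=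
  ((dirD vu (zderiv 2 f) q - RtoC 2 * (Ci * RtoC lambda) * zderiv 2 f q) / zderiv 3 f q
   - Ci * RtoC lambda * fst q)%C.

Section Kappa.

Variable lambda : R.
Variable U : pt -> Prop.
Variable f : pt -> C.
Hypothesis HU : open_pt U.
Hypothesis Hs : smooth_on U f.
Hypothesis Hh : holo_in_zeta_on U f.
Hypothesis H2nz : forall p, U p -> Dz (Dz f) p <> RtoC 0.
Hypothesis H3nz : forall p, U p -> Dz (Dz (Dz f)) p <> RtoC 0.

Lemma zderiv2_neq_0 q : U q -> zderiv 2 f q <> RtoC 0.
Proof. intros Hq. rewrite <- (iter_Dz_zderiv U f HU Hs Hh 2 q Hq). exact (H2nz q Hq). Qed.

Lemma zderiv3_neq_0 q : U q -> zderiv 3 f q <> RtoC 0.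
Proof. intros Hq. rewrite <- (iter_Dz_zderiv U f HU Hs Hh 3 q Hq). exact (H3nz q Hq). Qed.

Lemma is_derive_C_zderiv k q : U q ->
  is_derive_C (fun w => zderiv k f (w, snd q)) (fst q) (zderiv (S k) f q).
Proof. apply is_derive_C_iterD; auto. Qed.

Lemma is_derive_C_zderiv2_u q : U q ->
  is_derive_C (fun w => dirD vu (zderiv 2 f) (w, snd q)) (fst q) (dirD vx (dirD vu (zderiv 2 f)) q).
Proof. apply (is_derive_C_iterD U f HU Hs Hh (vu :: repeat vx 2)). Qed.

Lemma Dz_psi_div_phi q : U q -> Dz (fun q => (psi_of f q / phi_of f q)%C) q =
  ((dirD vx (dirD vu (zderiv 2 f)) q * zderiv 3 f q - dirD vu (zderiv 2 f) q * zderiv 4 f q)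
   / (zderiv 3 f q * zderiv 3 f q))%C.
Proof.
  intros Hq. destruct (open_pt_slice U q HU Hq) as [r Hr]. destruct q as [z u]. simpl in Hr.
  apply Dz_of_slice with (fun w => dirD vu (zderiv 2 f) (w, u) / zderiv 3 f (w, u))%C.
  - exists r. intros w Hw. specialize (Hr w Hw).
    rewrite (phi_of_zderiv U f), (psi_of_zderiv U f) by auto.
    pose proof (zderiv2_neq_0 _ Hr). pose proof (zderiv3_neq_0 _ Hr). cbn [fst snd]. field. auto.
  - cbn [fst].
    apply (is_derive_C_div (fun w => dirD vu (zderiv 2 f) (w, u)) (fun w => zderiv 3 f (w, u)));
      [apply (is_derive_C_zderiv2_u (z, u)) | apply (is_derive_C_zderiv _ (z, u)) | apply zderiv3_neq_0]; auto.
Qed.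

Lemma Dz_two_div_phi q : U q -> Dz (fun q => (RtoC 2 / phi_of f q)%C) q =
  ((RtoC 2 * zderiv 3 f q * zderiv 3 f q - RtoC 2 * zderiv 2 f q * zderiv 4 f q)
   / (zderiv 3 f q * zderiv 3 f q))%C.
Proof.
  intros Hq. destruct (open_pt_slice U q HU Hq) as [r Hr]. destruct q as [z u]. simpl in Hr.
  apply Dz_of_slice with (fun w => RtoC 2 * zderiv 2 f (w, u) / zderiv 3 f (w, u))%C.
  - exists r. intros w Hw. specialize (Hr w Hw).
    rewrite (phi_of_zderiv U f) by auto.
    pose proof (zderiv2_neq_0 _ Hr). pose proof (zderiv3_neq_0 _ Hr). cbn [fst snd]. field. auto.
  - cbn [fst]. pose proof (zderiv3_neq_0 _ Hq).
    apply (is_derive_C_div (fun w => RtoC 2 * zderiv 2 f (w, u)) (fun w => zderiv 3 f (w, u)))%C;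
      [apply is_derive_C_scal | |]; try apply (is_derive_C_zderiv _ (z, u)); auto.
Qed.

Lemma is_derive_C_kappa q : U q ->
  is_derive_C (fun w => kappa lambda f (w, snd q)) (fst q)
    (Dz (fun q => (psi_of f q / phi_of f q)%C) q -
     Ci * RtoC lambda * (Dz (fun q => (RtoC 2 / phi_of f q)%C) q + RtoC 1))%C.
Proof.
  intros Hq. rewrite Dz_psi_div_phi, Dz_two_div_phi by auto.
  pose proof (zderiv3_neq_0 _ Hq) as N3.
  pose proof (is_derive_C_minus _ _ _ _ _
    (is_derive_C_div _ _ _ _ _
      (is_derive_C_minus _ _ _ _ _ (is_derive_C_zderiv2_u q Hq)
         (is_derive_C_scal (RtoC 2 * (Ci * RtoC lambda)) _ _ _ (is_derive_C_zderiv 2 q Hq)))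
      (is_derive_C_zderiv 3 q Hq) ltac:(destruct q; exact N3))
    (is_derive_C_scal (Ci * RtoC lambda) _ _ _ (is_derive_C_id (fst q)))) as K.
  destruct q as [z u]. simpl in K |- *.
  match goal with |- is_derive_C _ _ ?T => match type of K with is_derive_C _ _ ?D =>
    replace T with D by (field; auto) end end.
  exact K.
Qed.

End Kappa.

(** * From the equation to the representation *)

Lemma open_R_ball c (r : R) : open_R (fun t => Rabs (t - c) < r).
Proof.
  intros t Ht. assert (P : 0 < r - Rabs (t - c)) by lra.
  exists (mkposreal _ P). simpl. intros s Hs.
  replace (s - c) with ((s - t) + (t - c)) by ring.
  eapply Rle_lt_trans; [apply Rabs_triang | lra].
Qed.

Section Forward.

Variable lambda : R.
Variable U : pt -> Prop.
Variable f : pt -> C.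
Hypothesis HU : open_pt U.
Hypothesis Hs : smooth_on U f.
Hypothesis Hh : holo_in_zeta_on U f.
Hypothesis H2nz : forall p, U p -> Dz (Dz f) p <> RtoC 0.
Hypothesis H3nz : forall p, U p -> Dz (Dz (Dz f)) p <> RtoC 0.
Hypothesis Heq : forall p, U p ->
  Dz (fun q => (psi_of f q / phi_of f q)%C) p =
  (Ci * RtoC lambda * (Dz (fun q => (RtoC 2 / phi_of f q)%C) p + RtoC 1))%C.

Variable z0 : C.
Variable u0 : R.
Variable r0 : posreal.
Hypothesis Hbox : forall z u, Cmod (z - z0)%C < r0 -> Rabs (u - u0) < r0 -> U (z, u).

Let I0 (s : R) : Prop := Rabs (s - u0) < r0.

Lemma kappa_const z s : Cmod (z - z0)%C < r0 -> I0 s ->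
  kappa lambda f (z, s) = kappa lambda f (z0, s).
Proof.
  intros Hz Hs0.
  apply (is_derive_C_zero_const (fun w => kappa lambda f (w, s)) z0 r0); auto.
  intros w Hw. pose proof (Hbox w s Hw Hs0) as Hws.
  pose proof (is_derive_C_kappa lambda U f HU Hs Hh H2nz H3nz (w, s) Hws) as K.
  rewrite (Heq _ Hws) in K. simpl in K.
  match type of K with is_derive_C _ _ ?D => replace D with (RtoC 0) in K by ring end.
  exact K.
Qed.

Definition coef (s : R) : C := kappa lambda f (z0, s).

Lemma zderiv2_u_eq z s : Cmod (z - z0)%C < r0 -> I0 s ->
  dirD vu (zderiv 2 f) (z, s) = (RtoC 2 * (Ci * RtoC lambda) * zderiv 2 f (z, s)
    + (coef s + Ci * RtoC lambda * z) * zderiv 3 f (z, s))%C.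
Proof.
  intros Hz Hs0. unfold coef. rewrite <- (kappa_const z s) by auto. unfold kappa. simpl.
  pose proof (zderiv3_neq_0 U f HU Hs Hh H3nz (z, s) (Hbox _ _ Hz Hs0)). field. auto.
Qed.

Lemma derivable_upto_coef n : derivable_upto I0 n coef.
Proof.
  assert (HI : open_R I0) by apply open_R_ball.
  assert (Hz : forall t, I0 t -> U (z0, t)) by (intros t Ht; apply Hbox; auto; apply Cmod_sub_self_lt).
  assert (Hsl : forall vs, derivable_upto I0 n (fun t => iterD vs f (z0, t)))
    by (intros; apply derivable_upto_vertical_slice with U; auto; apply smooth_iterD; auto).
  apply (derivable_upto_ext I0 HI n) with (fun s => (dirD vu (zderiv 2 f) (z0, s)
      + (- (RtoC 2 * (Ci * RtoC lambda))) * zderiv 2 f (z0, s)) * / zderiv 3 f (z0, s)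
      + (- (Ci * RtoC lambda * z0)))%C; auto.
  - intros s _. unfold coef, kappa. simpl. unfold Cdiv, Cminus. ring.
  - apply derivable_upto_plus; auto; [|apply derivable_upto_const, HI].
    apply derivable_upto_mult; auto.
    + apply derivable_upto_plus; auto; [apply (Hsl (vu :: repeat vx 2))|].
      apply derivable_upto_scal; auto. apply (Hsl (repeat vx 2)).
    + apply derivable_upto_inv; auto; [|apply (Hsl (repeat vx 3))].
      intros t Ht. apply (zderiv3_neq_0 U f HU Hs Hh H3nz), Hz, Ht.
Qed.

Definition coef_e (s : R) : C := (coef s * cexpi (lambda * s))%C.

Definition hF (s : R) : C :=
  (- RInt (fun t => Re (coef_e t)) u0 s, - RInt (fun t => Im (coef_e t)) u0 s).

Lemma derivable_upto_coef_e n : derivable_upto I0 n coef_e.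
Proof.
  assert (HI : open_R I0) by apply open_R_ball.
  apply derivable_upto_mult; auto; [apply derivable_upto_coef | apply derivable_upto_cexpi, HI].
Qed.

Lemma I0_between a b t : I0 a -> I0 b -> Rmin a b <= t <= Rmax a b -> I0 t.
Proof.
  unfold I0. intros Ha Hb Ht. unfold Rmin, Rmax in Ht.
  apply Rabs_lt_between' in Ha; apply Rabs_lt_between' in Hb; apply Rabs_lt_between'.
  destruct (Rle_dec a b); lra.
Qed.

Lemma is_derive_RC_hF s : I0 s -> is_derive_RC hF s (- coef_e s)%C.
Proof.
  intros Hs0.
  assert (HI : open_R I0) by apply open_R_ball.
  assert (HIu0 : I0 u0) by apply Rabs_sub_self_lt.
  assert (D0 : derivable_on I0 coef_e) by (apply (derivable_upto_coef_e 0 0%nat); lia).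
  assert (FTC : forall P : C -> R, (forall t, I0 t -> continuous (fun t => P (coef_e t)) t) ->
    is_derive (fun b => RInt (fun t => P (coef_e t)) u0 b) s (P (coef_e s))).
  { intros P HP.
    apply (is_derive_RInt (fun t => P (coef_e t)) (fun b => RInt (fun t => P (coef_e t)) u0 b) u0 s).
    - eapply filter_imp; [|apply (open_R_locally I0 s HI Hs0)]. intros b Hb.
      apply (@RInt_correct R_CompleteNormedModule), (@ex_RInt_continuous R_CompleteNormedModule).
      intros t Ht. apply HP, (I0_between u0 b); auto.
    - apply HP; auto. }
  split.
  - apply (is_derive_ext (fun s => - RInt (fun t => Re (coef_e t)) u0 s)); [reflexivity|].
    rewrite re_opp. apply (is_derive_opp (fun b => RInt (fun t => Re (coef_e t)) u0 b)), FTC.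
    intros t Ht. apply (@ex_derive_continuous R_AbsRing R_NormedModule), D0, Ht.
  - apply (is_derive_ext (fun s => - RInt (fun t => Im (coef_e t)) u0 s)); [reflexivity|].
    rewrite im_opp. apply (is_derive_opp (fun b => RInt (fun t => Im (coef_e t)) u0 b)), FTC.
    intros t Ht. apply (@ex_derive_continuous R_AbsRing R_NormedModule), D0, Ht.
Qed.

Lemma hF_u0 : hF u0 = RtoC 0.
Proof. unfold hF. rewrite !RInt_point. apply injective_projections; simpl; unfold zero; simpl; ring. Qed.

Lemma derivable_upto_hF n : derivable_upto I0 n hF.
Proof.
  assert (HI : open_R I0) by apply open_R_ball.
  apply (derivable_upto_of_deriv_all I0 HI hF (fun s => - coef_e s)%C); [apply is_derive_RC_hF|].
  intros m. apply (derivable_upto_ext I0 HI m (fun s => (- RtoC 1) * coef_e s)%C); [intros; ring|].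
  apply derivable_upto_scal; auto. apply derivable_upto_coef_e.
Qed.

Definition char_curve (z : C) (u s : R) : C :=
  ((z * cexpi (lambda * u) - hF u + hF s) * cexpi ((- lambda) * s))%C.

Lemma char_curve_at_u z u : char_curve z u u = z.
Proof.
  unfold char_curve. replace (z * cexpi (lambda * u) - hF u + hF u)%C with (z * cexpi (lambda * u))%C
    by ring.
  rewrite <- Cmult_assoc, Ropp_mult_distr_l_reverse, cexpi_opp_r. ring.
Qed.

Lemma char_curve_at_u0 z u :
  char_curve z u u0 = ((z * cexpi (lambda * u) - hF u) * cexpi ((- lambda) * u0))%C.
Proof. unfold char_curve. rewrite hF_u0. f_equal. ring. Qed.

Lemma is_derive_RC_char_invariant z u c : I0 c -> Cmod (char_curve z u c - z0)%C < r0 ->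
  is_derive_RC (fun s => cexpi ((- (2 * lambda)) * s) * zderiv 2 f (char_curve z u s, s))%C c
    (RtoC 0).
Proof.
  intros Hc HZ.
  set (W := (z * cexpi (lambda * u) - hF u + hF c)%C).
  set (em := cexpi (- lambda * c)). set (ep := cexpi (lambda * c)).
  assert (HUc : U (char_curve z u c, c)) by (apply Hbox; auto).
  assert (HZd : is_derive_RC (char_curve z u) c
      ((- coef_e c) * em + W * (Ci * RtoC (- lambda) * em))%C).
  { replace (- coef_e c)%C with (RtoC 0 + - coef_e c)%C by ring.
    apply (is_derive_RC_mult (fun s => z * cexpi (lambda * u) - hF u + hF s)%C);
      [apply is_derive_RC_plus; [apply is_derive_RC_const | apply is_derive_RC_hF; auto]|].
    apply is_derive_RC_cexpi. }
  pose proof (is_derive_RC_along_curve U (zderiv 2 f) (char_curve z u) c _ HU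
    (smooth_iterD U f _ Hs) HUc (cauchy_riemann_iterD U f HU Hs Hh _ _ HUc) HZd) as H3.
  pose proof (is_derive_RC_mult _ _ c _ _ (is_derive_RC_cexpi (- (2 * lambda)) c) H3) as HM.
  cbv beta in HM.
  match type of HM with is_derive_RC _ _ ?D => replace D with (RtoC 0) in HM end; [exact HM|].
  change (dirD vx (zderiv 2 f)) with (zderiv 3 f).
  rewrite (zderiv2_u_eq _ c HZ Hc).
  assert (Hpm : (ep * em)%C = RtoC 1)
    by (unfold ep, em; rewrite Ropp_mult_distr_l_reverse; apply cexpi_opp_r).
  assert (Hc2 : cexpi (- (2 * lambda) * c) = (em * em)%C)
    by (unfold em; rewrite cexpi_add; f_equal; ring).
  unfold coef_e, char_curve. fold W em ep. rewrite Hc2, !RtoC_opp, !RtoC_mult.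
  set (G2 := zderiv 2 f ((W * em)%C, c)). set (G3 := zderiv 3 f ((W * em)%C, c)).
  transitivity (em * em * G3 * coef c * (RtoC 1 - ep * em))%C; [rewrite Hpm; ring | ring].
Qed.

Lemma char_invariant z u : Rabs (u - u0) < r0 ->
  (forall s, Rabs (s - u0) <= Rabs (u - u0) -> Cmod (char_curve z u s - z0)%C < r0) ->
  (cexpi ((- (2 * lambda)) * u) * zderiv 2 f (z, u) =
   cexpi ((- (2 * lambda)) * u0) * zderiv 2 f (char_curve z u u0, u0))%C.
Proof.
  intros Hu Hp.
  pose proof (mean_value_ineq_RC
    (fun s => cexpi ((- (2 * lambda)) * s) * zderiv 2 f (char_curve z u s, s))%C
    (fun _ => RtoC 0) (RtoC 0) 0 u0 (u - u0)) as M.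
  cbv beta in M. replace (u0 + (u - u0)) with u in M by ring. rewrite char_curve_at_u in M.
  match goal with |- ?A = ?B =>
    assert (E : Cmod (A - B - RtoC (u - u0) * RtoC 0)%C = 0) end.
  { apply Rle_antisym; [|apply Cmod_ge_0]. eapply Rle_trans; [apply M|right; ring].
    intros c Hc. split; [apply is_derive_RC_char_invariant; [unfold I0; lra | apply Hp; auto]|].
    replace (RtoC 0 - RtoC 0)%C with (RtoC 0) by ring. rewrite Cmod_0. lra. }
  apply Cmod_eq_0 in E.
  match goal with |- ?A = ?B => replace A with ((A - B - RtoC (u - u0) * RtoC 0) + B)%C by ring end.
  rewrite E. ring.
Qed.

Let a0 : C := cexpi ((- lambda) * u0).

(* [Fk k] is the [k]-th derivative of the profile [F w = f (w a0, u0)]. *)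
Definition Fk (k : nat) (w : C) : C := (Cpow a0 k * zderiv k f ((w * a0)%C, u0))%C.

Definition Fdom (w : C) : Prop := Cmod (w * a0 - z0)%C < r0.

Lemma Fdom_U w : Fdom w -> U ((w * a0)%C, u0).
Proof. intros H. apply Hbox; auto. apply Rabs_sub_self_lt. Qed.

Lemma is_derive_C_Fk k w : Fdom w -> is_derive_C (Fk k) w (Fk (S k) w).
Proof.
  intros Hw. unfold Fk.
  pose proof (is_derive_C_zderiv U f HU Hs Hh k ((w * a0)%C, u0) (Fdom_U w Hw)) as H. simpl in H.
  pose proof (is_derive_C_comp (fun v => zderiv k f (v, u0)) (fun w => (w * a0)%C) w _ _
    (is_derive_C_mult_r a0 w) H) as K.
  pose proof (is_derive_C_scal (Cpow a0 k) _ _ _ K) as K2. cbv beta in K2.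
  replace (Cpow a0 (S k) * zderiv (S k) f ((w * a0)%C, u0))%C
    with (Cpow a0 k * (zderiv (S k) f ((w * a0)%C, u0) * a0))%C by (simpl; ring).
  exact K2.
Qed.

Lemma open_C_Fdom : open_C Fdom.
Proof.
  intros w Hw. unfold Fdom in *. assert (P : 0 < r0 - Cmod (w * a0 - z0)%C) by lra.
  exists (mkposreal _ P). simpl. intros v Hv.
  replace (v * a0 - z0)%C with ((v - w) * a0 + (w * a0 - z0))%C by ring.
  eapply Rle_lt_trans; [apply Cmod_triangle|]. rewrite Cmod_mult.
  replace (Cmod a0) with 1 by (symmetry; apply Cmod_cexpi). lra.
Qed.

Lemma C_derive_Fk k (H : C -> C) : (forall w, Fdom w -> H w = Fk k w) ->
  forall w, Fdom w -> C_derive H w = Fk (S k) w.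
Proof.
  intros HE w Hw. apply C_derive_of_is_derive_C.
  apply is_derive_C_ext_loc with (Fk k); [|apply is_derive_C_Fk; auto].
  destruct (open_C_Fdom w Hw) as [e He]. exists e. intros v Hv. symmetry. apply HE, He, Hv.
Qed.

Lemma C_diff_F w : Fdom w -> C_diff (Fk 0) w.
Proof. intros Hw. apply C_diff_of_is_derive_C with (Fk 1 w). apply is_derive_C_Fk; auto. Qed.

Lemma F_deriv3_neq_0 w : Fdom w -> C_derive (C_derive (C_derive (Fk 0))) w <> RtoC 0.
Proof.
  intros Hw.
  assert (E1 : forall v, Fdom v -> C_derive (Fk 0) v = Fk 1 v) by (apply C_derive_Fk; auto).
  assert (E2 : forall v, Fdom v -> C_derive (C_derive (Fk 0)) v = Fk 2 v)
    by (apply C_derive_Fk; auto).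
  rewrite (C_derive_Fk 2 _ E2 w Hw). unfold Fk.
  apply Cmult_neq_0; [apply Cpow_nz, cexpi_neq_0|].
  apply (zderiv3_neq_0 U f HU Hs Hh H3nz), Fdom_U, Hw.
Qed.

Definition Wvar (z : C) (u : R) : C := (z * cexpi (lambda * u) - hF u)%C.

Lemma Fdom_Wvar z u : Cmod (char_curve z u u0 - z0)%C < r0 -> Fdom (Wvar z u).
Proof. intros H. unfold Fdom, Wvar, a0. rewrite <- char_curve_at_u0. auto. Qed.

Lemma zderiv2_eq_F2 z u : Rabs (u - u0) < r0 ->
  (forall s, Rabs (s - u0) <= Rabs (u - u0) -> Cmod (char_curve z u s - z0)%C < r0) ->
  zderiv 2 f (z, u) = (cexpi (lambda * u) * cexpi (lambda * u) * Fk 2 (Wvar z u))%C.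
Proof.
  intros Hu Hp. pose proof (char_invariant z u Hu Hp) as HM.
  rewrite char_curve_at_u0 in HM. fold a0 in HM.
  assert (Ha : cexpi (- (2 * lambda) * u0) = (a0 * a0)%C)
    by (unfold a0; rewrite cexpi_add; f_equal; ring).
  assert (Hu2 : (cexpi (lambda * u) * cexpi (lambda * u) * cexpi (- (2 * lambda) * u))%C = RtoC 1)
    by (rewrite !cexpi_add; replace (lambda * u + lambda * u + - (2 * lambda) * u) with 0 by ring;
        apply cexpi_0).
  rewrite Ha in HM. unfold Fk, Wvar. simpl.
  transitivity (cexpi (lambda * u) * cexpi (lambda * u) *
    (cexpi (- (2 * lambda) * u) * zderiv 2 f (z, u)))%C.
  - rewrite Cmult_assoc, Hu2. ring.
  - rewrite HM. simpl. ring.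
Qed.

Definition A1 (u : R) : C := (zderiv 1 f (z0, u) - Fk 1 (Wvar z0 u) * cexpi (lambda * u))%C.
Definition A0 (u : R) : C := (f (z0, u) - Fk 0 (Wvar z0 u) - A1 u * z0)%C.

Lemma f_representation_slice u e1 : Rabs (u - u0) < r0 -> e1 <= r0 ->
  (forall z, Cmod (z - z0)%C < e1 ->
     forall s, Rabs (s - u0) <= Rabs (u - u0) -> Cmod (char_curve z u s - z0)%C < r0) ->
  forall z, Cmod (z - z0)%C < e1 -> f (z, u) = (Fk 0 (Wvar z u) + A1 u * z + A0 u)%C.
Proof.
  intros Hu He1 Hp.
  set (ep := cexpi (lambda * u)).
  assert (HUz : forall z, Cmod (z - z0)%C < e1 -> U (z, u)) by (intros; apply Hbox; lra).
  assert (HDz : forall z, Cmod (z - z0)%C < e1 -> Fdom (Wvar z u)).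
  { intros z Hz. apply Fdom_Wvar, Hp; auto. rewrite Rminus_eq_0, Rabs_R0. apply Rabs_pos. }
  assert (HW : forall z, is_derive_C (fun v => Wvar v u) z ep).
  { intros z. replace ep with (ep - RtoC 0)%C by ring.
    apply (is_derive_C_minus (fun v => v * ep)%C); [apply is_derive_C_mult_r | apply is_derive_C_const]. }
  set (Kp := fun z => (zderiv 1 f (z, u) - Fk 1 (Wvar z u) * ep)%C).
  assert (HK : forall z, Cmod (z - z0)%C < e1 ->
    is_derive_C (fun v => f (v, u) - Fk 0 (Wvar v u))%C z (Kp z)).
  { intros z Hz. apply (is_derive_C_minus (fun v => f (v, u))).
    - apply (is_derive_C_zderiv U f HU Hs Hh 0 (z, u)), HUz, Hz.
    - apply (is_derive_C_comp (Fk 0) (fun v => Wvar v u)); [apply HW | apply is_derive_C_Fk; auto]. }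
  assert (HKp : forall z, Cmod (z - z0)%C < e1 -> is_derive_C Kp z (RtoC 0)).
  { intros z Hz.
    pose proof (is_derive_C_minus _ _ _ _ _ (is_derive_C_zderiv U f HU Hs Hh 1 (z, u) (HUz z Hz))
      (is_derive_C_mult _ _ _ _ _
         (is_derive_C_comp (Fk 1) (fun v => Wvar v u) z _ _ (HW z) (is_derive_C_Fk 1 _ (HDz z Hz)))
         (is_derive_C_const ep z))) as K.
    cbv beta in K. simpl in K.
    match type of K with is_derive_C _ _ ?D => replace D with (RtoC 0) in K; [exact K|] end.
    rewrite (zderiv2_eq_F2 z u Hu (Hp z Hz)). fold ep. simpl. ring. }
  assert (HA1 : forall z, Cmod (z - z0)%C < e1 -> Kp z = A1 u)
    by (intros z Hz; apply (is_derive_C_zero_const Kp z0 e1); auto).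
  assert (HL : forall z, Cmod (z - z0)%C < e1 ->
    (f (z, u) - Fk 0 (Wvar z u) - A1 u * z = f (z0, u) - Fk 0 (Wvar z0 u) - A1 u * z0)%C).
  { intros z Hz.
    apply (is_derive_C_zero_const (fun v => f (v, u) - Fk 0 (Wvar v u) - A1 u * v)%C z0 e1); auto.
    intros v Hv.
    pose proof (is_derive_C_minus _ _ _ _ _ (HK v Hv) (is_derive_C_scal (A1 u) _ _ _ (is_derive_C_id v)))
      as K.
    cbv beta in K. rewrite HA1 in K by auto.
    replace (A1 u - A1 u * RtoC 1)%C with (RtoC 0) in K by ring. exact K. }
  intros z Hz. unfold A0. rewrite <- (HL z Hz). ring.
Qed.

Lemma char_curve_near z u s e1 : 0 < e1 -> e1 <= r0 / 4 ->
  4 * Rabs lambda * (Cmod z0 + r0) * e1 <= r0 / 4 ->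
  (forall t, Rabs (t - u0) < e1 -> Cmod (hF t) < r0 / 8) ->
  Cmod (z - z0)%C < e1 -> Rabs (u - u0) < e1 -> Rabs (s - u0) <= Rabs (u - u0) ->
  Cmod (char_curve z u s - z0)%C < r0.
Proof.
  intros He1 He2 He3 Hh8 Hz Hu Hs2.
  replace (char_curve z u s - z0)%C with ((z - z0) + z * (cexpi (lambda * u + - lambda * s) - RtoC 1)
       + (hF s - hF u) * cexpi (- lambda * s))%C by (unfold char_curve; rewrite <- cexpi_add; ring).
  assert (B1 : Cmod (z * (cexpi (lambda * u + - lambda * s) - RtoC 1))%C
                 <= (Cmod z0 + r0) * (4 * Rabs lambda * e1)).
  { rewrite Cmod_mult. apply Rmult_le_compat; try apply Cmod_ge_0.
    - replace z with ((z - z0) + z0)%C by ring. eapply Rle_trans; [apply Cmod_triangle|].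
      pose proof (cond_pos r0). lra.
    - eapply Rle_trans; [apply Cmod_cexpi_sub_1|].
      replace (lambda * u + - lambda * s) with (lambda * ((u - u0) - (s - u0))) by ring.
      rewrite Rabs_mult. pose proof (Rabs_pos lambda).
      assert (Rabs ((u - u0) - (s - u0)) <= 2 * e1)
        by (eapply Rle_trans; [apply Rabs_triang|]; rewrite Rabs_Ropp; lra).
      nra. }
  assert (B2 : Cmod ((hF s - hF u) * cexpi (- lambda * s))%C < r0 / 4).
  { rewrite Cmod_mult, Cmod_cexpi, Rmult_1_r.
    unfold Cminus. eapply Rle_lt_trans; [apply Cmod_triangle|]. rewrite Cmod_opp.
    assert (Cmod (hF s) < r0 / 8) by (apply Hh8; lra).
    assert (Cmod (hF u) < r0 / 8) by (apply Hh8; lra). lra. }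
  eapply Rle_lt_trans; [apply Cmod_triangle|].
  eapply Rle_lt_trans; [apply Rplus_le_compat_r, Cmod_triangle|].
  pose proof (cond_pos r0). nra.
Qed.

Lemma char_curves_in_box : exists e1 : posreal, e1 <= r0 /\
  forall z u, Cmod (z - z0)%C < e1 -> Rabs (u - u0) < e1 ->
  forall s, Rabs (s - u0) <= Rabs (u - u0) -> Cmod (char_curve z u s - z0)%C < r0.
Proof.
  destruct (is_derive_RC_increment_bound hF u0 _ (is_derive_RC_hF u0 (Rabs_sub_self_lt u0 r0)))
    as [dh Hdh].
  set (M := Cmod (- coef_e u0)%C + 1).
  assert (HM : 1 <= M) by (unfold M; pose proof (Cmod_ge_0 (- coef_e u0)%C); lra).
  set (L := 16 * (Rabs lambda + 1) * (Cmod z0 + r0 + 1)).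
  pose proof (Rabs_pos lambda). pose proof (Cmod_ge_0 z0). pose proof (cond_pos r0) as Hr.
  assert (HL : 16 <= L) by (unfold L; nra).
  set (e1 := Rmin (r0 / 4) (Rmin dh (Rmin (r0 / (16 * M)) (r0 / L)))).
  assert (He1p : 0 < e1)
    by (unfold e1; repeat apply Rmin_pos; try apply cond_pos; apply Rdiv_lt_0_compat; lra).
  assert (E1a : e1 <= r0 / 4) by apply Rmin_l.
  assert (E1b : e1 <= dh) by (unfold e1; eapply Rle_trans; [apply Rmin_r|apply Rmin_l]).
  assert (E1c : M * e1 <= r0 / 16).
  { apply Rmult_le_reg_l with (/ M); [apply Rinv_0_lt_compat; lra|].
    rewrite <- Rmult_assoc, Rinv_l, Rmult_1_l by lra.
    unfold e1. eapply Rle_trans; [apply Rmin_r|]. eapply Rle_trans; [apply Rmin_r|].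
    eapply Rle_trans; [apply Rmin_l|]. right. field. lra. }
  assert (E1d : L * e1 <= r0).
  { apply Rmult_le_reg_l with (/ L); [apply Rinv_0_lt_compat; lra|].
    rewrite <- Rmult_assoc, Rinv_l, Rmult_1_l by lra.
    unfold e1. eapply Rle_trans; [apply Rmin_r|]. eapply Rle_trans; [apply Rmin_r|].
    eapply Rle_trans; [apply Rmin_r|]. right. field. lra. }
  assert (Hh8 : forall t, Rabs (t - u0) < e1 -> Cmod (hF t) < r0 / 8).
  { intros t Ht. specialize (Hdh (t - u0) ltac:(lra)). rewrite hF_u0 in Hdh.
    replace (u0 + (t - u0)) with t in Hdh by ring. fold M in Hdh.
    replace (hF t - RtoC 0)%C with (hF t) in Hdh by ring.
    eapply Rle_lt_trans; [apply Hdh|].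
    assert (M * Rabs (t - u0) < M * e1) by (apply Rmult_lt_compat_l; lra). lra. }
  assert (He3 : 4 * Rabs lambda * (Cmod z0 + r0) * e1 <= r0 / 4).
  { assert (4 * Rabs lambda * (Cmod z0 + r0) * e1 <= 4 * (Rabs lambda + 1) * (Cmod z0 + r0 + 1) * e1)
      by (apply Rmult_le_compat_r; [lra | apply Rmult_le_compat; nra]).
    unfold L in E1d. lra. }
  exists (mkposreal _ He1p). split; [simpl; lra|]. simpl.
  intros z u Hz Hu s Hs2. apply (char_curve_near z u s e1); auto.
Qed.

Lemma derivable_upto_coefficients (J : R -> Prop) : open_R J -> (forall t, J t -> I0 t) ->
  (forall t, J t -> Fdom (Wvar z0 t)) ->
  forall n, derivable_upto J n hF /\ derivable_upto J n A1 /\ derivable_upto J n A0.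
Proof.
  intros HJ HJI HDW.
  assert (Qh : forall n, derivable_upto J n hF)
    by (intros; apply derivable_upto_sub with I0; auto; apply derivable_upto_hF).
  assert (QW : forall n, derivable_upto J n (Wvar z0)).
  { intros n. apply (derivable_upto_ext J HJ n (fun t => z0 * cexpi (lambda * t) + (- RtoC 1) * hF t)%C);
      [intros; unfold Wvar; ring|].
    apply derivable_upto_plus; auto; apply derivable_upto_scal; auto. apply derivable_upto_cexpi, HJ. }
  assert (QF : forall n k, derivable_upto J n (fun t => Fk k (Wvar z0 t)))
    by (apply derivable_upto_holo_comp with Fdom; auto; intros; apply is_derive_C_Fk; auto).
  assert (Qsl : forall n vs, derivable_upto J n (fun t => iterD vs f (z0, t))).
  { intros. apply derivable_upto_vertical_slice with U; auto; [apply smooth_iterD; auto|].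
    intros t Ht. apply Hbox; [apply Cmod_sub_self_lt | apply HJI, Ht]. }
  assert (QA1 : forall n, derivable_upto J n A1).
  { intros n. apply (derivable_upto_ext J HJ n
      (fun t => zderiv 1 f (z0, t) + (- RtoC 1) * (Fk 1 (Wvar z0 t) * cexpi (lambda * t)))%C);
      [intros; unfold A1; ring|].
    apply derivable_upto_plus; auto; [apply Qsl|].
    apply derivable_upto_scal, derivable_upto_mult; auto. apply derivable_upto_cexpi, HJ. }
  intros n. split; [|split]; auto.
  apply (derivable_upto_ext J HJ n (fun t => f (z0, t) + (- RtoC 1) * Fk 0 (Wvar z0 t) + (- z0) * A1 t)%C);
    [intros; unfold A0; ring|].
  apply derivable_upto_plus; auto; [|apply derivable_upto_scal; auto].
  apply derivable_upto_plus; auto; [apply (Qsl n nil)|apply derivable_upto_scal; auto].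
Qed.

Lemma forward_local : U (z0, u0) ->
  exists (F : C -> C) (D : C -> Prop) (h A1 A0 : R -> C) (I : R -> Prop) (e : posreal),
    open_C D /\ (forall w, D w -> C_diff F w) /\
    (forall w, D w -> C_derive (C_derive (C_derive F)) w <> RtoC 0) /\
    open_R I /\ smooth_R_on I h /\ smooth_R_on I A1 /\ smooth_R_on I A0 /\
    (forall (z : C) (u : R), U (z, u) ->
       Cmod (z - z0)%C < e -> Rabs (u - u0) < e ->
       I u /\ D (z * cexpi (lambda * u) - h u)%C /\
       f (z, u) = (F (z * cexpi (lambda * u) - h u) + A1 u * z + A0 u)%C).
Proof.
  intros Hp. destruct char_curves_in_box as [e1 [He1 Hcurve]].
  assert (HW : forall z u, Cmod (z - z0)%C < e1 -> Rabs (u - u0) < e1 -> Fdom (Wvar z u)).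
  { intros z u Hz Hu. apply Fdom_Wvar, Hcurve; auto. rewrite Rminus_eq_0, Rabs_R0. apply Rabs_pos. }
  pose proof (derivable_upto_coefficients (fun t => Rabs (t - u0) < e1) (open_R_ball u0 e1)
    ltac:(unfold I0; intros; lra) (fun t => HW z0 t (Cmod_sub_self_lt z0 e1))) as Q.
  exists (Fk 0), Fdom, hF, A1, A0, (fun t => Rabs (t - u0) < e1), e1.
  split; [apply open_C_Fdom|]. split; [apply C_diff_F|]. split; [apply F_deriv3_neq_0|].
  split; [apply open_R_ball|].
  split; [apply smooth_R_on_of_derivable_upto, Q|].
  split; [apply smooth_R_on_of_derivable_upto, Q|].
  split; [apply smooth_R_on_of_derivable_upto, Q|].
  intros z u _ Hz Hu. split; [exact Hu|]. split; [apply HW; auto|].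
  apply (f_representation_slice u e1); [lra | exact He1 | | exact Hz].
  intros z' Hz'. apply Hcurve; auto.
Qed.

End Forward.

(** * From the representation to the equation *)

Section Converse.

Variable lambda : R.
Variable U : pt -> Prop.
Variable f : pt -> C.
Hypothesis HU : open_pt U.
Hypothesis Hs : smooth_on U f.
Hypothesis Hh : holo_in_zeta_on U f.
Hypothesis H2nz : forall p, U p -> Dz (Dz f) p <> RtoC 0.
Hypothesis H3nz : forall p, U p -> Dz (Dz (Dz f)) p <> RtoC 0.

Variable F : C -> C.
Variables h A1 A0 : R -> C.
Variable I : R -> Prop.
Hypothesis Hsh : smooth_R_on I h.
Variable z0 : C.
Variable u0 : R.
Variable rho : posreal.

Let W (z : C) (u : R) : C := (z * cexpi (lambda * u) - h u)%C.

Hypothesis Hbox : forall z u, Cmod (z - z0)%C < rho -> Rabs (u - u0) < rho ->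
  U (z, u) /\ I u /\ f (z, u) = (F (W z u) + A1 u * z + A0 u)%C.

Section Slice.

Variables (z : C) (u : R).
Hypothesis Hz : Cmod (z - z0)%C < rho.
Hypothesis Hu : Rabs (u - u0) < rho.

Let em : C := cexpi ((- lambda) * u).
Let ep : C := cexpi (lambda * u).

Let Zv (v : C) : C := ((v + h u) * em)%C.
Let near_W (v : C) : Prop := Cmod (v - W z u)%C < rho - Cmod (z - z0)%C.

Lemma ep_em : (ep * em)%C = RtoC 1.
Proof. unfold ep, em. rewrite Ropp_mult_distr_l_reverse. apply cexpi_opp_r. Qed.

Lemma Zv_W : Zv (W z u) = z.
Proof.
  unfold Zv, W. fold ep. replace ((z * ep - h u + h u) * em)%C with (z * (ep * em))%C by ring.
  rewrite ep_em. ring.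
Qed.

Lemma W_Zv v : W (Zv v) u = v.
Proof.
  unfold W, Zv. fold ep. replace ((v + h u) * em * ep - h u)%C with ((v + h u) * (ep * em) - h u)%C
    by ring.
  rewrite ep_em. ring.
Qed.

Lemma near_W_box v : near_W v -> Cmod (Zv v - z0)%C < rho.
Proof.
  intros Hv. unfold near_W in Hv.
  replace (Zv v - z0)%C with ((v - W z u) * em + (Zv (W z u) - z0))%C by (unfold Zv; ring).
  rewrite Zv_W. eapply Rle_lt_trans; [apply Cmod_triangle|].
  rewrite Cmod_mult. unfold em. rewrite Cmod_cexpi. lra.
Qed.

Lemma near_W_open v : near_W v -> exists r : posreal, forall w, Cmod (w - v)%C < r -> near_W w.
Proof.
  intros Hv. unfold near_W in *. assert (P : 0 < rho - Cmod (z - z0)%C - Cmod (v - W z u)%C) by lra.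
  exists (mkposreal _ P). simpl. intros w Hw.
  replace (w - W z u)%C with ((w - v) + (v - W z u))%C by ring.
  eapply Rle_lt_trans; [apply Cmod_triangle|]. lra.
Qed.

Lemma near_W_W : near_W (W z u).
Proof.
  unfold near_W. replace (W z u - W z u)%C with (RtoC 0) by ring. rewrite Cmod_0. lra.
Qed.

Lemma U_Zv v : near_W v -> U (Zv v, u).
Proof. intros Hv. apply (Hbox (Zv v) u (near_W_box v Hv) Hu). Qed.

Lemma F_near_W v : near_W v -> F v = (f (Zv v, u) - A1 u * Zv v - A0 u)%C.
Proof.
  intros Hv. destruct (Hbox (Zv v) u (near_W_box v Hv) Hu) as (_ & _ & E).
  rewrite W_Zv in E. rewrite E. ring.
Qed.

Lemma is_derive_C_Zv v : is_derive_C Zv v em.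
Proof.
  pose proof (is_derive_C_plus _ _ v _ _ (is_derive_C_id v) (is_derive_C_const (h u) v)) as Hp.
  rewrite Cplus_0_r in Hp.
  pose proof (is_derive_C_comp (fun w => w * em)%C _ v _ _ Hp (is_derive_C_mult_r em _)) as K.
  rewrite Cmult_1_r in K. exact K.
Qed.

Lemma is_derive_C_zderiv_Zv k v : near_W v ->
  is_derive_C (fun w => zderiv k f (Zv w, u)) v (zderiv (S k) f (Zv v, u) * em)%C.
Proof.
  intros Hv. apply (is_derive_C_comp (fun w => zderiv k f (w, u)) Zv); [apply is_derive_C_Zv|].
  apply (is_derive_C_iterD U f HU Hs Hh (repeat vx k) (Zv v, u)), U_Zv, Hv.
Qed.

Lemma C_derive_F v : near_W v -> C_derive F v = ((zderiv 1 f (Zv v, u) - A1 u) * em)%C.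
Proof.
  intros Hv. apply C_derive_of_is_derive_C.
  apply is_derive_C_ext_loc with (fun w => f (Zv w, u) - A1 u * Zv w - A0 u)%C.
  - destruct (near_W_open v Hv) as [r Hr]. exists r. intros w Hw. symmetry. apply F_near_W, Hr, Hw.
  - replace ((zderiv 1 f (Zv v, u) - A1 u) * em)%C
      with (zderiv 1 f (Zv v, u) * em - A1 u * em - RtoC 0)%C by ring.
    apply is_derive_C_minus; [|apply is_derive_C_const].
    apply is_derive_C_minus; [apply (is_derive_C_zderiv_Zv 0); auto|].
    apply is_derive_C_scal, is_derive_C_Zv.
Qed.

Lemma C_derive2_F v : near_W v -> C_derive (C_derive F) v = (zderiv 2 f (Zv v, u) * (em * em))%C.
Proof.
  intros Hv. apply C_derive_of_is_derive_C.
  apply is_derive_C_ext_loc with (fun w => (zderiv 1 f (Zv w, u) - A1 u) * em)%C.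
  - destruct (near_W_open v Hv) as [r Hr]. exists r. intros w Hw. symmetry. apply C_derive_F, Hr, Hw.
  - replace (zderiv 2 f (Zv v, u) * (em * em))%C
      with ((zderiv 2 f (Zv v, u) * em - RtoC 0) * em + (zderiv 1 f (Zv v, u) - A1 u) * RtoC 0)%C
      by ring.
    apply (is_derive_C_mult (fun w => zderiv 1 f (Zv w, u) - A1 u)%C); [|apply is_derive_C_const].
    apply is_derive_C_minus; [apply (is_derive_C_zderiv_Zv 1); auto | apply is_derive_C_const].
Qed.

Lemma is_derive_C_F2_W : is_derive_C (C_derive (C_derive F)) (W z u) (zderiv 3 f (z, u) * (em * em * em))%C.
Proof.
  apply is_derive_C_ext_loc with (fun w => zderiv 2 f (Zv w, u) * (em * em))%C.
  - destruct (near_W_open _ near_W_W) as [r Hr]. exists r. intros w Hw. symmetry.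
    apply C_derive2_F, Hr, Hw.
  - pose proof (is_derive_C_mult _ _ _ _ _ (is_derive_C_zderiv_Zv 2 _ near_W_W)
      (is_derive_C_const (em * em)%C (W z u))) as K.
    cbv beta in K. rewrite Zv_W in K.
    replace (zderiv 3 f (z, u) * (em * em * em))%C
      with (zderiv 3 f (z, u) * em * (em * em) + zderiv 2 f (z, u) * RtoC 0)%C by ring.
    exact K.
Qed.

Lemma C_derive2_F_W : C_derive (C_derive F) (W z u) = (zderiv 2 f (z, u) * (em * em))%C.
Proof. rewrite C_derive2_F by apply near_W_W. rewrite Zv_W. reflexivity. Qed.

End Slice.

Lemma kappa_of_representation z u : Cmod (z - z0)%C < rho -> Rabs (u - u0) < rho ->
  kappa lambda f (z, u) = (- (derC h u * cexpi ((- lambda) * u)))%C.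
Proof.
  intros Hz Hu. destruct (Hbox z u Hz Hu) as (HUzu & HIu & _).
  set (ep := cexpi (lambda * u)). set (em := cexpi (- lambda * u)).
  assert (Hpm : (ep * em)%C = RtoC 1)
    by (unfold ep, em; rewrite Ropp_mult_distr_l_reverse; apply cexpi_opp_r).
  assert (Hg2 : forall s : R, Rabs (s - u0) < rho -> zderiv 2 f (z, s) =
      (cexpi (lambda * s) * cexpi (lambda * s) * C_derive (C_derive F) (W z s))%C).
  { intros s Hs3. rewrite (C_derive2_F_W z s Hz Hs3), Ropp_mult_distr_l_reverse.
    transitivity ((cexpi (lambda * s) * cexpi (- (lambda * s))) *
      (cexpi (lambda * s) * cexpi (- (lambda * s))) * zderiv 2 f (z, s))%C;
      [rewrite cexpi_opp_r | ]; ring. }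
  assert (Hloc : locally u (fun s => zderiv 2 f (z, s) =
      (cexpi (lambda * s) * cexpi (lambda * s) * C_derive (C_derive F) (W z s))%C)).
  { assert (P : 0 < rho - Rabs (u - u0)) by lra.
    exists (mkposreal _ P). intros s Hs'. change (Rabs (s - u) < rho - Rabs (u - u0)) in Hs'.
    apply Hg2. replace (s - u0) with ((s - u) + (u - u0)) by ring.
    eapply Rle_lt_trans; [apply Rabs_triang | lra]. }
  assert (HW : is_derive_RC (W z) u (z * (Ci * RtoC lambda * ep) - derC h u)%C).
  { apply is_derive_RC_minus; [apply (is_derive_RC_scal z), is_derive_RC_cexpi|].
    apply is_derive_RC_derC; apply (Hsh 0%nat u HIu). }
  pose proof (is_derive_RC_comp _ (W z) u _ _ (is_derive_C_F2_W z u Hz Hu) HW) as HM.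
  pose proof (is_derive_RC_mult _ _ u _ _
    (is_derive_RC_mult _ _ u _ _ (is_derive_RC_cexpi lambda u) (is_derive_RC_cexpi lambda u)) HM) as HM2.
  cbv beta in HM2.
  apply (is_derive_RC_ext_loc _ (fun s => zderiv 2 f (z, s))) in HM2;
    [|eapply filter_imp; [|exact Hloc]; intros s Hs'; simpl; auto].
  pose proof (is_derive_RC_vertical_slice (zderiv 2 f) z u (proj2 (Hs (repeat vx 2)) vu (z, u) HUzu))
    as HS.
  assert (Hg2u := eq_trans (eq_sym (derC_of_is_derive_RC _ _ _ HM2)) (derC_of_is_derive_RC _ _ _ HS)).
  pose proof (zderiv3_neq_0 U f HU Hs Hh H3nz (z, u) HUzu).
  unfold kappa. simpl. rewrite <- Hg2u, (C_derive2_F_W z u Hz Hu). fold ep em.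
  assert (Hnz : ep <> RtoC 0) by apply cexpi_neq_0.
  assert (Hem : em = (/ ep)%C) by (rewrite <- (Cmult_1_l (/ ep)%C), <- Hpm; field; auto).
  rewrite Hem. field. auto.
Qed.

Lemma equation_of_representation :
  Dz (fun q => (psi_of f q / phi_of f q)%C) (z0, u0) =
  (Ci * RtoC lambda * (Dz (fun q => (RtoC 2 / phi_of f q)%C) (z0, u0) + RtoC 1))%C.
Proof.
  assert (Hz0 : Cmod (z0 - z0)%C < rho) by apply Cmod_sub_self_lt.
  assert (Hu0 : Rabs (u0 - u0) < rho) by apply Rabs_sub_self_lt.
  destruct (Hbox z0 u0 Hz0 Hu0) as [HUp _].
  pose proof (is_derive_C_kappa lambda U f HU Hs Hh H2nz H3nz (z0, u0) HUp) as K.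
  assert (K0 : is_derive_C (fun w => kappa lambda f (w, u0)) z0 (RtoC 0)).
  { apply is_derive_C_ext_loc with (fun _ => (- (derC h u0 * cexpi ((- lambda) * u0))))%C;
      [|apply is_derive_C_const].
    exists rho. intros w Hw. symmetry. apply kappa_of_representation; auto. }
  pose proof (eq_trans (eq_sym (C_derive_of_is_derive_C _ _ _ K)) (C_derive_of_is_derive_C _ _ _ K0))
    as E.
  match goal with |- ?A = ?B => replace A with ((A - B) + B)%C by ring end.
  simpl in E. rewrite E. ring.
Qed.

End Converse.

Theorem mainTheorem6 (lambda : R) (U : pt -> Prop) (f : pt -> C) :
  open_pt U -> connected_pt U ->
  smooth_on U f -> holo_in_zeta_on U f ->
  (forall p, U p -> Dz (Dz f) p <> RtoC 0) ->
  (forall p, U p -> Dz (Dz (Dz f)) p <> RtoC 0) ->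
  ((forall p, U p ->
      Dz (fun q => (psi_of f q / phi_of f q)%C) p =
      (Ci * RtoC lambda * (Dz (fun q => (RtoC 2 / phi_of f q)%C) p + RtoC 1))%C)
   <->
   (forall p, U p ->
      exists (F : C -> C) (D : C -> Prop) (h A1 A0 : R -> C) (I : R -> Prop) (e : posreal),
        open_C D /\ (forall w, D w -> C_diff F w) /\
        (forall w, D w -> C_derive (C_derive (C_derive F)) w <> RtoC 0) /\
        open_R I /\ smooth_R_on I h /\ smooth_R_on I A1 /\ smooth_R_on I A0 /\
        (forall (z : C) (u : R), U (z, u) ->
           Cmod (z - fst p)%C < e -> Rabs (u - snd p) < e ->
           I u /\ D (z * cexpi (lambda * u) - h u)%C /\
           f (z, u) = (F (z * cexpi (lambda * u) - h u) + A1 u * z + A0 u)%C))).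
Proof.
  intros HU _ Hs Hh H2 H3. split.
  - intros Heq [z0 u0] Hp. destruct (HU _ Hp) as [r0 Hr0].
    exact (forward_local lambda U f HU Hs Hh H2 H3 Heq z0 u0 r0 Hr0 Hp).
  - intros Hrep [z0 u0] Hp.
    destruct (Hrep _ Hp) as (F & D & h & A1 & A0 & I & e & _ & _ & _ & _ & Hsh & _ & _ & Hrel).
    destruct (HU _ Hp) as [r Hr]. simpl in Hrel.
    set (rho := mkposreal _ (Rmin_pos _ _ (cond_pos e) (cond_pos r))).
    assert (Hrho : rho <= e /\ rho <= r) by (split; [apply Rmin_l | apply Rmin_r]).
    apply (equation_of_representation lambda U f HU Hs Hh H2 H3 F h A1 A0 I Hsh z0 u0 rho).
    intros z u Hz Hu.
    assert (HUzu : U (z, u)) by (apply Hr; simpl; lra).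
    destruct (Hrel z u HUzu ltac:(lra) ltac:(lra)) as (HIu & _ & Hf). auto.
Qed.
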